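(* Let $n\ge2$, let $I\subseteq[0,\infty)$ be an interval with non-empty interior, let $\tilde{\mathbf{P}}$ be a generalized $n$-system on $I$, and let $D$ be a discrete subset of $I$. Then there exists an $n$-system $\mathbf{P}$ on $I$ such that $\mathbf{P}(t)=\tilde{\mathbf{P}}(t)$ for every $t\in D$.
   Context: Let $I\subseteq[0,\infty)$ be an interval with non-empty interior. A map $\mathbf{P}\colon I\to\mathbb{R}^n$ is continuous piecewise linear if it is continuous, the set $D$ of points of $I$ where it is not differentiable (including the endpoints of $I$ that lie in $I$) is discrete in $I$, and its derivative is locally constant on $I\setminus D$. An $n$-system on $I$ is a continuous piecewise linear map $\mathbf{P}=(P_1,\dots,P_n)\colon I\to\mathbb{R}^n$ such that: (S1) for each $q\in I$, $0\le P_1(q)\le\cdots\le P_n(q)$ and $P_1(q)+\cdots+P_n(q)=q$; (S2) on each non-empty open subinterval $H$ of $I$ on which $\mathbf{P}$ is differentiable, there is $r\in\{1,\dots,n\}$ such that $P_r$ has slope $1$ on $H$ and all $P_j$ with $j\ne r$ are constant on $H$; (S3) if $q$ is an interior point of $I$ where $\mathbf{P}$ is not differentiable and the integers $r,s$ with $P_r'(q^-)=P_s'(q^+)=1$ satisfy $r<s$, then $P_r(q)=P_{r+1}(q)=\cdots=P_s(q)$. A generalized $n$-system on $I$ is a continuous piecewise linear map $\mathbf{P}=(P_1,\dots,P_n)\colon I\to\mathbb{R}^n$ such that: (G1) for each $q\in I$, $0\le P_1(q)\le\cdots\le P_n(q)$ and $P_1(q)+\cdots+P_n(q)=q$; (G2)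 on each non-empty open subinterval $H$ of $I$ on which $\mathbf{P}$ is differentiable, there are integers $1\le \underline{r}\le\overline{r}\le n$ such that $P_{\underline r},\dots,P_{\overline r}$ coincide on $H$ and have slope $1/(\overline r-\underline r+1)$, while every other $P_j$ is constant on $H$; (G3) if $q$ is an interior point of $I$ where $\mathbf{P}$ is not differentiable, and $\underline r,\overline r,\underline s,\overline s$ are the integers with $P_j'(q^-)=1/(\overline r-\underline r+1)$ for $\underline r\le j\le\overline r$ and $P_j'(q^+)=1/(\overline s-\underline s+1)$ for $\underline s\le j\le \overline s$ (as in (G2) on the adjacent intervals), and if $\underline r<\overline s$, then $P_{\underline r}(q)=P_{\underline r+1}(q)=\cdots=P_{\overline s}(q)$. *)

From Stdlib Require Import Reals Lra Lia List.
Open Scope R_scope.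

(* A vector-valued map I -> R^n is represented as P : R -> nat -> R;
   component j (0-based, j < n) is P t j, i.e. paper's P_{j+1}.
   Only the values for t in I and j < n matter. *)

Definition is_interval (I : R -> Prop) : Prop :=
  forall x y z, I x -> I z -> x <= y -> y <= z -> I y.

Definition good_interval (I : R -> Prop) : Prop :=
  is_interval I /\ (forall x, I x -> 0 <= x) /\
  exists a b, a < b /\ I a /\ I b.

Definition interior (I : R -> Prop) (x : R) : Prop :=
  exists eps, 0 < eps /\ forall y, Rabs (y - x) < eps -> I y.

Definition discrete_in (I S : R -> Prop) : Prop :=
  forall x, I x -> exists eps, 0 < eps /\
    exists l : list R, forall y, S y -> Rabs (y - x) < eps -> In y l.

Definition comp (P : R -> nat -> R) (j : nat) : R -> R := fun t => P t j.

Definition differentiable_at (n : nat) (P : R -> nat -> R) (x : R) : Prop :=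
  forall j, (j < n)%nat -> exists l, derivable_pt_lim (comp P j) x l.

Definition nondiff_set (n : nat) (I : R -> Prop) (P : R -> nat -> R) (x : R) : Prop :=
  I x /\ (~ interior I x \/ ~ differentiable_at n P x).

Definition continuous_on (n : nat) (I : R -> Prop) (P : R -> nat -> R) : Prop :=
  forall j x, (j < n)%nat -> I x -> forall eps, 0 < eps ->
    exists delta, 0 < delta /\
      forall y, I y -> Rabs (y - x) < delta -> Rabs (P y j - P x j) < eps.

Definition cont_piecewise_linear (n : nat) (I : R -> Prop) (P : R -> nat -> R) : Prop :=
  continuous_on n I P /\
  discrete_in I (nondiff_set n I P) /\
  (forall t, I t -> ~ nondiff_set n I P t ->
     exists eps, 0 < eps /\ exists v : nat -> R,
       forall s, I s -> ~ nondiff_set n I P s -> Rabs (s - t) < eps ->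
         forall j, (j < n)%nat -> derivable_pt_lim (comp P j) s (v j)).

Definition left_deriv (f : R -> R) (x l : R) : Prop :=
  forall eps, 0 < eps -> exists delta, 0 < delta /\
    forall h, - delta < h -> h < 0 -> Rabs ((f (x + h) - f x) / h - l) < eps.

Definition right_deriv (f : R -> R) (x l : R) : Prop :=
  forall eps, 0 < eps -> exists delta, 0 < delta /\
    forall h, 0 < h -> h < delta -> Rabs ((f (x + h) - f x) / h - l) < eps.

Fixpoint sumR (f : nat -> R) (n : nat) : R :=
  match n with O => 0 | S k => sumR f k + f k end.

(* (S1) = (G1) *)
Definition cond1 (n : nat) (I : R -> Prop) (P : R -> nat -> R) : Prop :=
  forall q, I q ->
    0 <= P q 0%nat /\
    (forall j, (S j < n)%nat -> P q j <= P q (S j)) /\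
    sumR (P q) n = q.

Definition diff_subinterval (n : nat) (I : R -> Prop) (P : R -> nat -> R) (a b : R) : Prop :=
  a < b /\ (forall t, a < t < b -> I t) /\
  (forall t, a < t < b -> differentiable_at n P t).

Definition n_system (n : nat) (I : R -> Prop) (P : R -> nat -> R) : Prop :=
  cont_piecewise_linear n I P /\
  cond1 n I P /\
  (* (S2) *)
  (forall a b, diff_subinterval n I P a b ->
     exists r, (r < n)%nat /\
       forall t, a < t < b ->
         forall j, (j < n)%nat ->
           derivable_pt_lim (comp P j) t (if Nat.eqb j r then 1 else 0)) /\
  (* (S3) *)
  (forall q, interior I q -> ~ differentiable_at n P q ->
     forall r s, (r < s)%nat -> (s < n)%nat ->
       left_deriv (comp P r) q 1 -> right_deriv (comp P s) q 1 ->
       forall j, (r <= j <= s)%nat -> P q j = P q r).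

Definition in_block (lo hi j : nat) : bool := Nat.leb lo j && Nat.leb j hi.

Definition block_slope (lo hi j : nat) : R :=
  if in_block lo hi j then 1 / INR (hi - lo + 1) else 0.

Definition gen_n_system (n : nat) (I : R -> Prop) (P : R -> nat -> R) : Prop :=
  cont_piecewise_linear n I P /\
  cond1 n I P /\
  (* (G2) *)
  (forall a b, diff_subinterval n I P a b ->
     exists lo hi, (lo <= hi)%nat /\ (hi < n)%nat /\
       forall t, a < t < b ->
         (forall j, (lo <= j <= hi)%nat -> P t j = P t lo) /\
         (forall j, (j < n)%nat ->
            derivable_pt_lim (comp P j) t (block_slope lo hi j))) /\
  (* (G3) *)
  (forall q, interior I q -> ~ differentiable_at n P q ->
     forall rlo rhi slo shi,
       (rlo <= rhi)%nat -> (rhi < n)%nat -> (slo <= shi)%nat -> (shi < n)%nat ->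
       (forall j, (j < n)%nat -> left_deriv (comp P j) q (block_slope rlo rhi j)) ->
       (forall j, (j < n)%nat -> right_deriv (comp P j) q (block_slope slo shi j)) ->
       (rlo < shi)%nat ->
       forall j, (rlo <= j <= shi)%nat -> P q j = P q rlo).

From Pilot Require Import Defs.
From Stdlib Require Import Reals Lra Lia List ClassicalEpsilon Classical.
Open Scope R_scope.

(* Call a point of [I] special if it lies in [D], is an endpoint of [I], or [Pt] is not
   differentiable there; special points form a discrete set, which [P] will share with
   [Pt]. On each component [(u, w)] of the remaining set, (G2) makes [Pt] affine with a
   block of [k] equal components rising with slope [1/k]. There [P] climbs a staircase
   instead: with [d = (w - u)/k] the components of the block rise with slope 1 one after
   the other, from the top one down, for time [d] each (on an unbounded component [d = 1]
   and afterwards the top component, which is then the last one, keeps rising). It agrees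
   with [Pt] at both ends and preserves the order, the block being level at both ends.
   The only non-smooth switches to a higher component are at a corner of a staircase,
   where the whole block is level, and at special points, where (S3) follows from (G3)
   or, if [Pt] is smooth there, from comparing the blocks on both sides. *)

Lemma derivable_pt_lim_locally_affine (f : R -> R) x c rho :
  0 < rho -> (forall h, Rabs h < rho -> f (x + h) - f x = c * h) ->
  derivable_pt_lim f x c.
Proof.
  intros Hrho Hf eps Heps. exists (mkposreal rho Hrho). intros h Hh0 Hh. simpl in Hh.
  rewrite (Hf h Hh). replace (c * h / h - c) with 0 by (field; auto).
  rewrite Rabs_R0; lra.
Qed.

Lemma derivable_left_deriv f x l : derivable_pt_lim f x l -> left_deriv f x l.
Proof.
  intros Hd eps Heps. destruct (Hd eps Heps) as [delta Hdelta].
  exists delta. split; [apply cond_pos|]. intros h Hh1 Hh2.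
  apply Hdelta; [lra|]. rewrite Rabs_left; lra.
Qed.

Lemma derivable_right_deriv f x l : derivable_pt_lim f x l -> right_deriv f x l.
Proof.
  intros Hd eps Heps. destruct (Hd eps Heps) as [delta Hdelta].
  exists delta. split; [apply cond_pos|]. intros h Hh1 Hh2.
  apply Hdelta; [lra|]. rewrite Rabs_right; lra.
Qed.

Lemma left_deriv_locally_affine f x c rho : 0 < rho ->
  (forall h, - rho < h < 0 -> f (x + h) - f x = c * h) -> left_deriv f x c.
Proof.
  intros Hrho Hf eps Heps. exists rho. split; auto. intros h Hh1 Hh2.
  rewrite Hf by lra. replace (c * h / h - c) with 0 by (field; lra). rewrite Rabs_R0; lra.
Qed.

Lemma right_deriv_locally_affine f x c rho : 0 < rho ->
  (forall h, 0 < h < rho -> f (x + h) - f x = c * h) -> right_deriv f x c.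
Proof.
  intros Hrho Hf eps Heps. exists rho. split; auto. intros h Hh1 Hh2.
  rewrite Hf by lra. replace (c * h / h - c) with 0 by (field; lra). rewrite Rabs_R0; lra.
Qed.

Lemma left_deriv_locally_affine_unique f x l c rho : 0 < rho -> left_deriv f x l ->
  (forall h, - rho < h < 0 -> f (x + h) - f x = c * h) -> l = c.
Proof.
  intros Hrho Hd Hf. destruct (Req_dec l c) as [|Hne]; auto.
  destruct (Hd (Rabs (l - c))) as [delta [Hdelta Hq]]; [apply Rabs_pos_lt; lra|].
  set (h := - Rmin delta rho / 2).
  assert (Hmin : 0 < Rmin delta rho) by (apply Rmin_glb_lt; auto).
  pose proof (Rmin_l delta rho). pose proof (Rmin_r delta rho).
  specialize (Hq h ltac:(unfold h; lra) ltac:(unfold h; lra)).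
  rewrite Hf in Hq by (unfold h; lra).
  replace (c * h / h - l) with (- (l - c)) in Hq by (field; unfold h; lra).
  rewrite Rabs_Ropp in Hq. lra.
Qed.

Lemma right_deriv_locally_affine_unique f x l c rho : 0 < rho -> right_deriv f x l ->
  (forall h, 0 < h < rho -> f (x + h) - f x = c * h) -> l = c.
Proof.
  intros Hrho Hd Hf. destruct (Req_dec l c) as [|Hne]; auto.
  destruct (Hd (Rabs (l - c))) as [delta [Hdelta Hq]]; [apply Rabs_pos_lt; lra|].
  set (h := Rmin delta rho / 2).
  assert (Hmin : 0 < Rmin delta rho) by (apply Rmin_glb_lt; auto).
  pose proof (Rmin_l delta rho). pose proof (Rmin_r delta rho).
  specialize (Hq h ltac:(unfold h; lra) ltac:(unfold h; lra)).
  rewrite Hf in Hq by (unfold h; lra).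
  replace (c * h / h - l) with (- (l - c)) in Hq by (field; unfold h; lra).
  rewrite Rabs_Ropp in Hq. lra.
Qed.

Lemma affine_limit_value (f : R -> R) x0 c a (S : R -> Prop) :
  (forall eps, 0 < eps -> exists delta, 0 < delta /\
      forall y, S y -> Rabs (y - x0) < delta -> Rabs (f y - f x0) < eps) ->
  (forall h, 0 < h -> exists y, Rabs (y - x0) < h /\ S y /\ f y = c + a * (y - x0)) ->
  f x0 = c.
Proof.
  intros Hc Hp. destruct (Req_dec (f x0) c) as [|Hne]; auto.
  set (d := Rabs (f x0 - c)).
  assert (Hd : 0 < d) by (apply Rabs_pos_lt; lra).
  destruct (Hc (d / 2)) as [delta [Hdelta Hc2]]; [lra|].
  assert (Ha : 0 < Rabs a + 1) by (pose proof (Rabs_pos a); lra).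
  set (h := Rmin delta (d / (2 * (Rabs a + 1)))).
  assert (Hh : 0 < h) by (apply Rmin_glb_lt; auto; apply Rdiv_lt_0_compat; lra).
  destruct (Hp h Hh) as [y [Hy1 [Hy2 Hy3]]].
  assert (Hyd : Rabs (y - x0) < delta) by (eapply Rlt_le_trans; [exact Hy1 | apply Rmin_l]).
  specialize (Hc2 y Hy2 Hyd).
  assert (Hyh : Rabs (y - x0) <= d / (2 * (Rabs a + 1)))
    by (left; eapply Rlt_le_trans; [exact Hy1 | apply Rmin_r]).
  assert (Hb : Rabs (f y - c) <= Rabs a * (d / (2 * (Rabs a + 1)))).
  { rewrite Hy3. replace (c + a * (y - x0) - c) with (a * (y - x0)) by ring. rewrite Rabs_mult.
    apply Rmult_le_compat_l; auto. apply Rabs_pos. }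
  assert (Hb2 : Rabs a * (d / (2 * (Rabs a + 1))) < d / 2).
  { apply Rmult_lt_reg_r with (2 * (Rabs a + 1)); [lra|].
    replace (Rabs a * (d / (2 * (Rabs a + 1))) * (2 * (Rabs a + 1))) with (Rabs a * d)
      by (field; lra).
    nra. }
  assert (d <= Rabs (f x0 - f y) + Rabs (f y - c)).
  { unfold d. replace (f x0 - c) with ((f x0 - f y) + (f y - c)) by ring. apply Rabs_triang. }
  rewrite Rabs_minus_sym in Hc2. lra.
Qed.

Lemma Rle_of_affine_le_right A B c d E : 0 < E ->
  (forall h, 0 < h < E -> A + c * h <= B + d * h) -> A <= B.
Proof.
  intros HE H. destruct (Rle_dec A B) as [|Hn]; auto. exfalso.
  set (K := Rabs c + Rabs d + 1).
  assert (HK : 0 < K) by (unfold K; pose proof (Rabs_pos c); pose proof (Rabs_pos d); lra).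
  set (h := Rmin (E / 2) ((A - B) / (2 * K))).
  assert (Hh : 0 < h) by (apply Rmin_glb_lt; [lra | apply Rdiv_lt_0_compat; lra]).
  assert (Hh1 : h <= E / 2) by apply Rmin_l.
  assert (Hh2 : K * h <= (A - B) / 2).
  { apply Rle_trans with (K * ((A - B) / (2 * K))).
    - apply Rmult_le_compat_l; [lra | apply Rmin_r].
    - right. field. lra. }
  specialize (H h ltac:(lra)).
  pose proof (Rle_abs d). pose proof (Rle_abs (- c)). rewrite Rabs_Ropp in *.
  unfold K in Hh2. nra.
Qed.

Lemma in_block_iff lo hi j : in_block lo hi j = true <-> (lo <= j <= hi)%nat.
Proof. unfold in_block. rewrite Bool.andb_true_iff, !Nat.leb_le. tauto. Qed.

Lemma in_block_false lo hi j : in_block lo hi j = false <-> ~ (lo <= j <= hi)%nat.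
Proof. rewrite <- in_block_iff. destruct (in_block lo hi j); intuition congruence. Qed.

Ltac case_in_block lo hi j :=
  let E := fresh "E" in
  destruct (in_block lo hi j) eqn:E;
  [apply in_block_iff in E | apply in_block_false in E].

Lemma if_mul_indicator (b : bool) h : (if b then h else 0) = (if b then 1 else 0) * h.
Proof. destruct b; ring. Qed.

Lemma Rabs_if_le (b : bool) x : Rabs (if b then x else 0) <= Rabs x.
Proof. destruct b; [lra|]. rewrite Rabs_R0. apply Rabs_pos. Qed.

Lemma sumR_ext f g m : (forall j, (j < m)%nat -> f j = g j) -> sumR f m = sumR g m.
Proof.
  induction m; simpl; intros H; auto. rewrite IHm by (intros; apply H; lia). rewrite H by lia. auto.
Qed.

Lemma sumR_plus f g m : sumR (fun j => f j + g j) m = sumR f m + sumR g m.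
Proof. induction m; simpl; [lra|]. rewrite IHm. ring. Qed.

Lemma sumR_scal c f m : sumR (fun j => c * f j) m = c * sumR f m.
Proof. induction m; simpl; [ring|]. rewrite IHm. ring. Qed.

Lemma sumR_const c m : sumR (fun _ => c) m = INR m * c.
Proof. induction m; simpl sumR; [simpl; ring|]. rewrite IHm, S_INR. ring. Qed.

Lemma sumR_shift f m : sumR f (S m) = f 0%nat + sumR (fun j => f (S j)) m.
Proof. induction m; simpl in *; [ring|]. rewrite IHm. ring. Qed.

Lemma sumR_zero f m : (forall j, (j < m)%nat -> f j = 0) -> sumR f m = 0.
Proof. intros H. rewrite (sumR_ext f (fun _ => 0)) by auto. rewrite sumR_const. ring. Qed.

Lemma sumR_indicator h c m : (h < m)%nat ->
  sumR (fun j => if Nat.eqb j h then c else 0) m = c.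
Proof.
  induction m; intros Hh; [lia|]. simpl.
  destruct (Nat.eq_dec h m) as [->|Hne].
  - rewrite sumR_zero, Nat.eqb_refl; [ring|].
    intros j Hj. destruct (Nat.eqb_spec j m); [lia|auto].
  - rewrite IHm by lia. destruct (Nat.eqb_spec m h); [lia|ring].
Qed.

Lemma sumR_vanishing_tail f a m : (a <= m)%nat -> (forall j, (a <= j)%nat -> f j = 0) ->
  sumR f m = sumR f a.
Proof.
  induction m; intros Ha H.
  - replace a with 0%nat by lia. auto.
  - destruct (Nat.eq_dec a (S m)) as [->|Hne]; auto.
    simpl. rewrite IHm, (H m) by (auto; lia). ring.
Qed.

Lemma sumR_in_block_rev lo d : forall f,
  sumR (fun j => if in_block lo (lo + d) j then f (lo + d - j)%nat else 0) (S (lo + d)) =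
  sumR f (S d).
Proof.
  induction d; intros f.
  - simpl sumR at 1. rewrite sumR_zero.
    + rewrite Nat.add_0_r, Nat.sub_diag.
      replace (in_block lo lo lo) with true by (symmetry; apply in_block_iff; lia).
      simpl. ring.
    + intros j Hj. case_in_block lo (lo + 0)%nat j; auto; lia.
  - replace (S (lo + S d)) with (S (S (lo + d))) by lia.
    change (sumR ?g (S ?k)) with (sumR g k + g k) at 1.
    rewrite (sumR_ext _ (fun j => if in_block lo (lo + d) j then f (S (lo + d - j)) else 0)).
    + rewrite (IHd (fun m => f (S m))).
      replace (in_block lo (lo + S d) (S (lo + d))) with true
        by (symmetry; apply in_block_iff; lia).
      replace (lo + S d - S (lo + d))%nat with 0%nat by lia.
      rewrite (sumR_shift f (S d)). ring.
    + intros j Hj. case_in_block lo (lo + S d)%nat j; case_in_block lo (lo + d)%nat j;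
        try lia; auto.
      replace (lo + S d - j)%nat with (S (lo + d - j)) by lia. auto.
Qed.

Lemma sumR_in_block lo hi n f : (lo <= hi)%nat -> (hi < n)%nat ->
  sumR (fun j => if in_block lo hi j then f (hi - j)%nat else 0) n = sumR f (hi - lo + 1).
Proof.
  intros H1 H2.
  rewrite (sumR_vanishing_tail _ (S hi))
    by (try lia; intros j Hj; case_in_block lo hi j; auto; lia).
  pose proof (sumR_in_block_rev lo (hi - lo) f) as H.
  replace (lo + (hi - lo))%nat with hi in H by lia. rewrite H. f_equal. lia.
Qed.

Definition clamp (x d : R) : R := Rmin (Rmax x 0) d.

Lemma clamp_lo x d : x <= 0 -> 0 <= d -> clamp x d = 0.
Proof. unfold clamp, Rmin, Rmax; intros; repeat destruct Rle_dec; lra. Qed.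
Lemma clamp_mid x d : 0 <= x <= d -> clamp x d = x.
Proof. unfold clamp, Rmin, Rmax; intros; repeat destruct Rle_dec; lra. Qed.
Lemma clamp_hi x d : d <= x -> 0 <= d -> clamp x d = d.
Proof. unfold clamp, Rmin, Rmax; intros; repeat destruct Rle_dec; lra. Qed.
Lemma clamp_bounds x d : 0 <= d -> 0 <= clamp x d <= d.
Proof. unfold clamp, Rmin, Rmax; intros; repeat destruct Rle_dec; lra. Qed.
Lemma clamp_mono x y d : x <= y -> clamp x d <= clamp y d.
Proof. unfold clamp, Rmin, Rmax; intros; repeat destruct Rle_dec; lra. Qed.

Lemma sumR_clamp e d k : 0 <= e -> 0 <= d ->
  sumR (fun m => clamp (e - INR m * d) d) k = Rmin e (INR k * d).
Proof.
  intros He Hd. induction k.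
  - simpl. unfold Rmin. destruct Rle_dec; lra.
  - simpl sumR. rewrite IHk, S_INR.
    assert (0 <= INR k * d) by (apply Rmult_le_pos; auto; apply pos_INR).
    set (A := INR k * d) in *. replace ((INR k + 1) * d) with (A + d) by (unfold A; ring).
    destruct (Rle_dec e A); [rewrite clamp_lo by lra|].
    2: destruct (Rle_dec e (A + d)); [rewrite clamp_mid by lra | rewrite clamp_hi by lra].
    all: unfold Rmin; repeat destruct Rle_dec; lra.
Qed.

Lemma INR_mul_le a b d : (a <= b)%nat -> 0 <= d -> INR a * d <= INR b * d.
Proof. intros. apply Rmult_le_compat_r; auto. apply le_INR; auto. Qed.

Lemma exists_step_left K d e : 0 < d -> 0 < e <= INR K * d ->
  exists m, (m < K)%nat /\ INR m * d < e <= INR (S m) * d.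
Proof.
  induction K; intros Hd He; [simpl in He; lra|].
  destruct (Rle_dec e (INR K * d)).
  - destruct (IHK Hd ltac:(lra)) as [m [H1 H2]]. exists m; split; auto; lia.
  - exists K. split; [lia|]. rewrite S_INR in *. lra.
Qed.

Lemma exists_step_right K d e : 0 < d -> 0 <= e < INR K * d ->
  exists m, (m < K)%nat /\ INR m * d <= e < INR (S m) * d.
Proof.
  induction K; intros Hd He; [simpl in He; lra|].
  destruct (Rlt_dec e (INR K * d)).
  - destruct (IHK Hd ltac:(lra)) as [m [H1 H2]]. exists m; split; auto; lia.
  - exists K. split; [lia|]. rewrite S_INR in *. lra.
Qed.

Lemma clamp_on_step i m d e : 0 < d -> INR m * d <= e <= INR (S m) * d ->
  clamp (e - INR i * d) d =
  (if (i <? m)%nat then d else if (i =? m)%nat then e - INR m * d else 0).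
Proof.
  intros Hd He. rewrite S_INR in He.
  destruct (Nat.ltb_spec i m).
  - apply clamp_hi; [|lra]. pose proof (INR_mul_le (S i) m d ltac:(lia) ltac:(lra)).
    rewrite S_INR in *. lra.
  - destruct (Nat.eqb_spec i m).
    + subst. apply clamp_mid. lra.
    + apply clamp_lo; [|lra]. pose proof (INR_mul_le (S m) i d ltac:(lia) ltac:(lra)).
      rewrite S_INR in *. lra.
Qed.

(* The increment at time [e] of component [j] on a staircase over the block [lo..hi]:
   components [hi], [hi - 1], ..., [lo] rise with slope 1 for time [d] each, after which
   [hi] alone keeps rising. *)
Definition staircase (lo hi : nat) (d e : R) (j : nat) : R :=
  (if in_block lo hi j then clamp (e - INR (hi - j) * d) d else 0) +
  (if Nat.eqb j hi then Rmax 0 (e - INR (hi - lo + 1) * d) else 0).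

Lemma staircase_nonneg lo hi d e j : 0 <= d -> 0 <= staircase lo hi d e j.
Proof.
  intros Hd. unfold staircase.
  assert (0 <= (if in_block lo hi j then clamp (e - INR (hi - j) * d) d else 0))
    by (destruct in_block; [apply clamp_bounds; auto | lra]).
  assert (0 <= (if Nat.eqb j hi then Rmax 0 (e - INR (hi - lo + 1) * d) else 0))
    by (destruct Nat.eqb; [apply Rmax_l | lra]).
  lra.
Qed.

Lemma staircase_on_step lo hi d m e j : 0 < d -> (m < hi - lo + 1)%nat ->
  INR m * d <= e <= INR (S m) * d ->
  staircase lo hi d e j = (if in_block lo hi j then
     (if (hi - j <? m)%nat then d else if (hi - j =? m)%nat then e - INR m * d else 0) else 0).
Proof.
  intros Hd Hm He. unfold staircase.
  pose proof (INR_mul_le (S m) (hi - lo + 1) d ltac:(lia) ltac:(lra)).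
  rewrite Rmax_left by lra.
  destruct (in_block lo hi j); [rewrite (clamp_on_step (hi - j) m d e) by auto|];
    destruct (Nat.eqb j hi); ring.
Qed.

Lemma staircase_saturated lo hi d e j : 0 < d -> INR (hi - lo + 1) * d <= e ->
  staircase lo hi d e j = (if in_block lo hi j then d else 0) +
                          (if Nat.eqb j hi then e - INR (hi - lo + 1) * d else 0).
Proof.
  intros Hd He. unfold staircase. rewrite Rmax_right by lra. f_equal.
  case_in_block lo hi j; auto. apply clamp_hi; [|lra].
  pose proof (INR_mul_le (S (hi - j)) (hi - lo + 1) d ltac:(lia) ltac:(lra)).
  rewrite S_INR in *. lra.
Qed.

Lemma staircase_first_step lo hi d e j : 0 < d -> (lo <= hi)%nat -> 0 <= e < d ->
  staircase lo hi d e j = if Nat.eqb j hi then e else 0.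
Proof.
  intros Hd Hlh He. rewrite (staircase_on_step lo hi d 0) by (auto; try lia; simpl; lra).
  case_in_block lo hi j.
  - destruct (Nat.ltb_spec (hi - j) 0); [lia|].
    destruct (Nat.eqb_spec (hi - j) 0); destruct (Nat.eqb_spec j hi); try lia; simpl; ring.
  - destruct (Nat.eqb_spec j hi); auto; lia.
Qed.

Lemma staircase_last_step lo hi d e j : 0 < d -> (lo <= hi)%nat ->
  INR (hi - lo + 1) * d - d < e <= INR (hi - lo + 1) * d ->
  staircase lo hi d e j = (if in_block lo hi j then d else 0) +
                          (if Nat.eqb j lo then e - INR (hi - lo + 1) * d else 0).
Proof.
  intros Hd Hlh He.
  assert (HK : INR (hi - lo + 1) = INR (hi - lo) + 1)
    by (replace (hi - lo + 1)%nat with (S (hi - lo)) by lia; apply S_INR).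
  rewrite (staircase_on_step lo hi d (hi - lo))
    by (auto; try lia; rewrite S_INR; rewrite HK in He; lra).
  case_in_block lo hi j.
  - destruct (Nat.ltb_spec (hi - j) (hi - lo)); destruct (Nat.eqb_spec (hi - j) (hi - lo));
      destruct (Nat.eqb_spec j lo); try lia; rewrite ?HK; ring.
  - destruct (Nat.eqb_spec j lo); try lia; ring.
Qed.

Lemma staircase_left_slope lo hi d e : (lo <= hi)%nat -> 0 < d -> 0 < e ->
  exists eta a, 0 < eta <= e /\ (lo <= a <= hi)%nat /\
    (forall e', e - eta < e' <= e -> forall j,
       staircase lo hi d e' j = staircase lo hi d e j + (if Nat.eqb j a then e' - e else 0)) /\
    (INR (hi - lo + 1) * d < e -> a = hi) /\
    (e <= INR (hi - lo + 1) * d -> exists m, (m < hi - lo + 1)%nat /\ a = (hi - m)%nat /\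
                                     INR m * d < e <= INR (S m) * d).
Proof.
  intros Hlh Hd He. set (K := (hi - lo + 1)%nat).
  destruct (Rle_dec e (INR K * d)) as [Hle|Hgt].
  - destruct (exists_step_left K d e) as [m [Hm Hme]]; auto.
    assert (0 <= INR m * d) by (apply Rmult_le_pos; [apply pos_INR | lra]).
    exists (e - INR m * d), (hi - m)%nat.
    split; [lra|]. split; [unfold K in Hm; lia|].
    split; [|split; [intros; lra | intros; exists m; auto]].
    intros e' He' j.
    rewrite (staircase_on_step lo hi d m e'), (staircase_on_step lo hi d m e) by (auto; lra).
    case_in_block lo hi j.
    + destruct (Nat.ltb_spec (hi - j) m); destruct (Nat.eqb_spec (hi - j) m);
        destruct (Nat.eqb_spec j (hi - m)); try lia; ring.
    + destruct (Nat.eqb_spec j (hi - m)); try lia; ring.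
  - assert (0 <= INR K * d) by (apply Rmult_le_pos; [apply pos_INR | lra]).
    exists (e - INR K * d), hi.
    split; [lra|]. split; [lia|]. split; [|split; [auto | intros; lra]].
    intros e' He' j. rewrite !staircase_saturated by (auto; unfold K in *; lra).
    destruct (Nat.eqb_spec j hi); ring.
Qed.

Lemma staircase_right_slope lo hi d e : (lo <= hi)%nat -> 0 < d -> 0 < e ->
  exists eta a, 0 < eta /\ (e < INR (hi - lo + 1) * d -> e + eta <= INR (hi - lo + 1) * d) /\
    (lo <= a <= hi)%nat /\
    (forall e', e <= e' < e + eta -> forall j,
       staircase lo hi d e' j = staircase lo hi d e j + (if Nat.eqb j a then e' - e else 0)) /\
    (INR (hi - lo + 1) * d <= e -> a = hi) /\
    (e < INR (hi - lo + 1) * d -> exists m, (m < hi - lo + 1)%nat /\ a = (hi - m)%nat /\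
                                    INR m * d <= e < INR (S m) * d).
Proof.
  intros Hlh Hd He. set (K := (hi - lo + 1)%nat).
  destruct (Rlt_dec e (INR K * d)) as [Hlt|Hge].
  - destruct (exists_step_right K d e) as [m [Hm Hme]]; [auto | lra|].
    exists (INR (S m) * d - e), (hi - m)%nat.
    split; [lra|]. split; [intros; pose proof (INR_mul_le (S m) K d ltac:(lia) ltac:(lra)); lra|].
    split; [unfold K in Hm; lia|].
    split; [|split; [intros; lra | intros; exists m; auto]].
    intros e' He' j.
    rewrite (staircase_on_step lo hi d m e'), (staircase_on_step lo hi d m e) by (auto; lra).
    case_in_block lo hi j.
    + destruct (Nat.ltb_spec (hi - j) m); destruct (Nat.eqb_spec (hi - j) m);
        destruct (Nat.eqb_spec j (hi - m)); try lia; ring.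
    + destruct (Nat.eqb_spec j (hi - m)); try lia; ring.
  - exists 1, hi. split; [lra|]. split; [intros; lra|]. split; [lia|].
    split; [|split; [auto | intros; lra]].
    intros e' He' j. rewrite !staircase_saturated by (auto; unfold K in *; lra).
    destruct (Nat.eqb_spec j hi); ring.
Qed.

(* The only switch to a higher component happens at the corner [e = k d], where the
   whole block has risen by [d] and is therefore level again. *)
Lemma staircase_slopes lo hi d e : (lo <= hi)%nat -> 0 < d -> 0 < e ->
  exists etaL etaR aL aR,
    0 < etaL <= e /\ 0 < etaR /\
    (e < INR (hi - lo + 1) * d -> e + etaR <= INR (hi - lo + 1) * d) /\
    (lo <= aL <= hi)%nat /\ (lo <= aR <= hi)%nat /\
    (forall e', e - etaL < e' <= e -> forall j,
       staircase lo hi d e' j = staircase lo hi d e j + (if Nat.eqb j aL then e' - e else 0)) /\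
    (forall e', e <= e' < e + etaR -> forall j,
       staircase lo hi d e' j = staircase lo hi d e j + (if Nat.eqb j aR then e' - e else 0)) /\
    ((aL < aR)%nat -> forall j, (lo <= j <= hi)%nat ->
       staircase lo hi d e j = staircase lo hi d e lo).
Proof.
  intros Hlh Hd He.
  destruct (staircase_left_slope lo hi d e Hlh Hd He)
    as [etaL [aL [HL1 [HL2 [HL3 [HL4 HL5]]]]]].
  destruct (staircase_right_slope lo hi d e Hlh Hd He)
    as [etaR [aR [HR1 [HR2 [HR3 [HR4 [HR5 HR6]]]]]]].
  exists etaL, etaR, aL, aR. do 7 (split; auto). intros Hlt j Hj.
  destruct (Rlt_dec (INR (hi - lo + 1) * d) e) as [Hgt|Hle]; [rewrite (HL4 Hgt) in Hlt; lia|].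
  destruct (Rlt_dec e (INR (hi - lo + 1) * d)) as [Hlt2|Hge].
  - destruct (HL5 ltac:(lra)) as [mL [? [? ?]]]. destruct (HR6 Hlt2) as [mR [? [? ?]]].
    subst aL aR. pose proof (INR_mul_le (S mR) mL d ltac:(lia) ltac:(lra)). lra.
  - rewrite !staircase_saturated by (auto; lra).
    destruct (Nat.eqb_spec j hi); destruct (Nat.eqb_spec lo hi);
      case_in_block lo hi j; case_in_block lo hi lo; try lia; lra.
Qed.

Lemma staircase_out_of_block lo hi d e j : (lo <= hi)%nat -> ~ (lo <= j <= hi)%nat ->
  staircase lo hi d e j = 0.
Proof.
  intros Hlh Hj. unfold staircase.
  replace (in_block lo hi j) with false by (symmetry; apply in_block_false; auto).
  destruct (Nat.eqb_spec j hi); [lia | ring].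
Qed.

Lemma staircase_mono_in_block lo hi d e j : 0 <= d -> (lo <= j)%nat -> (j < hi)%nat ->
  staircase lo hi d e j <= staircase lo hi d e (S j).
Proof.
  intros Hd H1 H2. unfold staircase.
  replace (in_block lo hi j) with true by (symmetry; apply in_block_iff; lia).
  replace (in_block lo hi (S j)) with true by (symmetry; apply in_block_iff; lia).
  destruct (Nat.eqb_spec j hi); [lia|].
  pose proof (INR_mul_le (hi - S j) (hi - j) d ltac:(lia) Hd).
  pose proof (clamp_mono (e - INR (hi - j) * d) (e - INR (hi - S j) * d) d ltac:(lra)).
  destruct (Nat.eqb (S j) hi); [pose proof (Rmax_l 0 (e - INR (hi - lo + 1) * d))|]; lra.
Qed.

Lemma staircase_le_step lo hi d e j : 0 <= d -> e <= INR (hi - lo + 1) * d ->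
  staircase lo hi d e j <= d.
Proof.
  intros Hd He. unfold staircase. rewrite Rmax_left by lra.
  destruct (in_block lo hi j); [pose proof (clamp_bounds (e - INR (hi - j) * d) d Hd)|];
    destruct (Nat.eqb j hi); lra.
Qed.

Definition unit_slope_at n (P : R -> nat -> R) s r := forall j, (j < n)%nat ->
  derivable_pt_lim (Defs.comp P j) s (if Nat.eqb j r then 1 else 0).

Definition rises_left n (I : R -> Prop) (P : R -> nat -> R) x eta a :=
  forall y, I y -> x - eta < y <= x -> forall j, (j < n)%nat ->
    P y j = P x j + (if Nat.eqb j a then y - x else 0).

Definition rises_right n (I : R -> Prop) (P : R -> nat -> R) x eta a :=
  forall y, I y -> x <= y < x + eta -> forall j, (j < n)%nat ->
    P y j = P x j + (if Nat.eqb j a then y - x else 0).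

(* The local shape of an n-system at [x]; being so at every point is enough
   ([n_system_of_locally_unit_slope]). *)
Definition locally_unit_slope n (I : R -> Prop) (P : R -> nat -> R) x :=
  exists eta, 0 < eta /\ exists aL aR, (aL < n)%nat /\ (aR < n)%nat /\
    rises_left n I P x eta aL /\ rises_right n I P x eta aR /\
    (forall y, I y -> 0 < Rabs (y - x) < eta -> Defs.interior I y) /\
    (Defs.interior I x -> (aL < aR)%nat -> forall j, (aL <= j <= aR)%nat -> P x j = P x aL).

Lemma rises_left_unit_slope n I P x eta a y : rises_left n I P x eta a ->
  x - eta < y < x -> Defs.interior I y -> unit_slope_at n P y a.
Proof.
  intros HL Hy [r [Hr Hint]] j Hj.
  set (rho := Rmin r (Rmin (y - (x - eta)) (x - y))).
  assert (Hrho : 0 < rho) by (unfold rho; repeat apply Rmin_glb_lt; lra).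
  apply (derivable_pt_lim_locally_affine _ _ _ rho Hrho). intros h Hh. unfold Defs.comp.
  pose proof (Rmin_l r (Rmin (y - (x - eta)) (x - y))).
  pose proof (Rmin_r r (Rmin (y - (x - eta)) (x - y))).
  pose proof (Rmin_l (y - (x - eta)) (x - y)). pose proof (Rmin_r (y - (x - eta)) (x - y)).
  fold rho in H, H0. destruct (Rabs_def2 _ _ Hh).
  rewrite (HL (y + h)), (HL y); auto; try lra.
  - rewrite (if_mul_indicator _ (y + h - x)), (if_mul_indicator _ (y - x)). ring.
  - apply Hint. rewrite Rminus_diag, Rabs_R0; auto.
  - apply Hint. replace (y + h - y) with h by ring. lra.
Qed.

Lemma rises_right_unit_slope n I P x eta a y : rises_right n I P x eta a ->
  x < y < x + eta -> Defs.interior I y -> unit_slope_at n P y a.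
Proof.
  intros HR Hy [r [Hr Hint]] j Hj.
  set (rho := Rmin r (Rmin (x + eta - y) (y - x))).
  assert (Hrho : 0 < rho) by (unfold rho; repeat apply Rmin_glb_lt; lra).
  apply (derivable_pt_lim_locally_affine _ _ _ rho Hrho). intros h Hh. unfold Defs.comp.
  pose proof (Rmin_l r (Rmin (x + eta - y) (y - x))).
  pose proof (Rmin_r r (Rmin (x + eta - y) (y - x))).
  pose proof (Rmin_l (x + eta - y) (y - x)). pose proof (Rmin_r (x + eta - y) (y - x)).
  fold rho in H, H0. destruct (Rabs_def2 _ _ Hh).
  rewrite (HR (y + h)), (HR y); auto; try lra.
  - rewrite (if_mul_indicator _ (y + h - x)), (if_mul_indicator _ (y - x)). ring.
  - apply Hint. rewrite Rminus_diag, Rabs_R0; auto.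
  - apply Hint. replace (y + h - y) with h by ring. lra.
Qed.

Lemma rises_differentiable n I P x eta aL aR :
  0 < eta -> (aL < n)%nat -> (aR < n)%nat ->
  rises_left n I P x eta aL -> rises_right n I P x eta aR ->
  Defs.interior I x -> differentiable_at n P x -> aL = aR /\ unit_slope_at n P x aL.
Proof.
  intros Heta HaL HaR HL HR [r [Hr Hint]] Hd.
  set (rho := Rmin eta r).
  assert (Hrho : 0 < rho) by (apply Rmin_glb_lt; auto).
  pose proof (Rmin_l eta r). pose proof (Rmin_r eta r). fold rho in H, H0.
  assert (Hslope : forall j, (j < n)%nat -> forall l, derivable_pt_lim (Defs.comp P j) x l ->
     l = (if Nat.eqb j aL then 1 else 0) /\ l = (if Nat.eqb j aR then 1 else 0)).
  { intros j Hj l Hdl. split.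
    - apply (left_deriv_locally_affine_unique _ _ _ _ rho Hrho (derivable_left_deriv _ _ _ Hdl)).
      intros h Hh. unfold Defs.comp. rewrite (HL (x + h)); auto; try lra.
      + rewrite (if_mul_indicator _ (x + h - x)). ring.
      + apply Hint. replace (x + h - x) with h by ring. rewrite Rabs_left; lra.
    - apply (right_deriv_locally_affine_unique _ _ _ _ rho Hrho (derivable_right_deriv _ _ _ Hdl)).
      intros h Hh. unfold Defs.comp. rewrite (HR (x + h)); auto; try lra.
      + rewrite (if_mul_indicator _ (x + h - x)). ring.
      + apply Hint. replace (x + h - x) with h by ring. rewrite Rabs_right; lra. }
  split.
  - destruct (Hd aL HaL) as [l Hdl]. destruct (Hslope aL HaL l Hdl) as [E1 E2].
    rewrite Nat.eqb_refl in E1. destruct (Nat.eqb_spec aL aR); auto. lra.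
  - intros j Hj. destruct (Hd j Hj) as [l Hdl]. destruct (Hslope j Hj l Hdl) as [E1 E2].
    rewrite <- E1. auto.
Qed.

Lemma unit_slope_near n I P t : locally_unit_slope n I P t ->
  Defs.interior I t -> differentiable_at n P t ->
  exists a eta, (a < n)%nat /\ 0 < eta /\
    forall s, Rabs (s - t) < eta -> Defs.interior I s -> unit_slope_at n P s a.
Proof.
  intros [eta [Heta [aL [aR [HaL [HaR [HL [HR _]]]]]]]] Hti Htd.
  destruct (rises_differentiable n I P t eta aL aR Heta HaL HaR HL HR Hti Htd) as [<- HDt].
  exists aL, eta. split; auto. split; auto. intros s Hst Hsi.
  destruct (Rabs_def2 _ _ Hst).
  destruct (Rtotal_order s t) as [Hlt|[->|Hgt]].
  - apply (rises_left_unit_slope n I P t eta aL s HL ltac:(lra) Hsi).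
  - apply HDt.
  - apply (rises_right_unit_slope n I P t eta aL s HR ltac:(lra) Hsi).
Qed.

Lemma locally_constant_propagate_right (Q : R -> nat -> Prop) a b t0 r0 :
  (forall s r r', Q s r -> Q s r' -> r = r') ->
  (forall t, a < t < b -> exists r eta, 0 < eta /\
     forall s, a < s < b -> Rabs (s - t) < eta -> Q s r) ->
  a < t0 < b -> Q t0 r0 -> forall t, t0 <= t < b -> Q t r0.
Proof.
  intros Hu Hloc Ht0 HQ0 t Ht.
  set (E := fun x => t0 <= x <= t /\ forall y, t0 <= y <= x -> Q y r0).
  assert (HE0 : E t0) by (split; [lra | intros y Hy; replace y with t0 by lra; auto]).
  destruct (completeness E) as [s [Hs1 Hs2]].
  { exists t. intros x [Hx _]. lra. }
  { exists t0. auto. }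
  assert (Hst0 : t0 <= s) by (apply Hs1; auto).
  assert (Hst : s <= t) by (apply Hs2; intros x [Hx _]; lra).
  destruct (Hloc s ltac:(lra)) as [r [eta [Heta Hq]]].
  assert (Hx : exists x, E x /\ s - eta < x).
  { apply NNPP. intros Hn. assert (s <= s - eta); [|lra]. apply Hs2. intros x Ex.
    apply Rnot_lt_le. intros Hlt. apply Hn. exists x. auto. }
  destruct Hx as [x [[Hx1 Hx2] Hx3]].
  assert (Hxs : x <= s) by (apply Hs1; split; auto).
  assert (r = r0) as ->.
  { apply (Hu x); [apply Hq; try lra; rewrite Rabs_left1; lra | apply Hx2; lra]. }
  set (z := Rmin t (s + eta / 2)).
  assert (Hz1 : z <= t) by apply Rmin_l. assert (Hz2 : z <= s + eta / 2) by apply Rmin_r.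
  assert (Hz : z = t \/ z = s + eta / 2) by (unfold z, Rmin; destruct Rle_dec; auto).
  assert (HEz : E z).
  { split; [destruct Hz; lra|].
    intros y Hy. destruct (Rle_dec y x); [apply Hx2; lra|].
    apply Hq; [lra|]. apply Rabs_def1; lra. }
  assert (z <= s) by (apply Hs1; auto).
  assert (z = t) by (destruct Hz; lra).
  apply (proj2 HEz). lra.
Qed.

Lemma locally_constant_on_interval (Q : R -> nat -> Prop) a b t0 r0 :
  (forall s r r', Q s r -> Q s r' -> r = r') ->
  (forall t, a < t < b -> exists r eta, 0 < eta /\
     forall s, a < s < b -> Rabs (s - t) < eta -> Q s r) ->
  a < t0 < b -> Q t0 r0 -> forall t, a < t < b -> Q t r0.
Proof.
  intros Hu Hloc Ht0 HQ0 t Ht.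
  destruct (Rle_dec t0 t); [apply (locally_constant_propagate_right Q a b t0); auto; lra|].
  pose proof (locally_constant_propagate_right (fun s r => Q (- s) r) (- b) (- a) (- t0) r0)
    as Hrefl.
  rewrite <- (Ropp_involutive t). apply Hrefl; try lra.
  - intros s r r'. apply Hu.
  - intros t1 Ht1. destruct (Hloc (- t1) ltac:(lra)) as [r [eta [He Hq]]].
    exists r, eta. split; auto. intros s Hs Hst. apply Hq; [lra|].
    replace (- s - - t1) with (- (s - t1)) by ring. rewrite Rabs_Ropp. auto.
  - rewrite Ropp_involutive. auto.
Qed.

Lemma rises_left_shrink n I P x eta eta' a : eta' <= eta ->
  rises_left n I P x eta a -> rises_left n I P x eta' a.
Proof. intros Hle H y Hy Hyx. apply H; auto. lra. Qed.

Lemma rises_right_shrink n I P x eta eta' a : eta' <= eta ->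
  rises_right n I P x eta a -> rises_right n I P x eta' a.
Proof. intros Hle H y Hy Hyx. apply H; auto. lra. Qed.

Lemma rises_left_of_min n (I : R -> Prop) P x eta a : ~ (exists y, I y /\ y < x) ->
  rises_left n I P x eta a.
Proof.
  intros Hno y Hy Hyx j Hj. destruct (Req_dec y x) as [->|Hne].
  - rewrite Rminus_diag. destruct (Nat.eqb j a); ring.
  - exfalso. apply Hno. exists y. split; auto. lra.
Qed.

Lemma rises_right_of_max n (I : R -> Prop) P x eta a : ~ (exists y, I y /\ x < y) ->
  rises_right n I P x eta a.
Proof.
  intros Hno y Hy Hyx j Hj. destruct (Req_dec y x) as [->|Hne].
  - rewrite Rminus_diag. destruct (Nat.eqb j a); ring.
  - exfalso. apply Hno. exists y. split; auto. lra.
Qed.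

Section LocallyUnitSlope.
Variables (n : nat) (I : R -> Prop) (P : R -> nat -> R).
Hypothesis HP : forall x, I x -> locally_unit_slope n I P x.

Lemma locally_unit_slope_continuous : continuous_on n I P.
Proof.
  intros j x Hj Hx eps Heps.
  destruct (HP x Hx) as [eta [Heta [aL [aR [_ [_ [HL [HR _]]]]]]]].
  exists (Rmin eta eps). split; [apply Rmin_glb_lt; auto|]. intros y Hy Hyx.
  assert (Rabs (y - x) < eta) by (eapply Rlt_le_trans; [exact Hyx | apply Rmin_l]).
  assert (Rabs (y - x) < eps) by (eapply Rlt_le_trans; [exact Hyx | apply Rmin_r]).
  destruct (Rabs_def2 _ _ H).
  destruct (Rle_dec y x);
    [rewrite (HL y) by (auto; lra) | rewrite (HR y) by (auto; lra)];
    rewrite Rplus_minus_l; eapply Rle_lt_trans; try apply Rabs_if_le; auto.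
Qed.

Lemma locally_unit_slope_nondiff_discrete : discrete_in I (nondiff_set n I P).
Proof.
  intros x Hx. destruct (HP x Hx) as [eta [Heta [aL [aR [_ [_ [HL [HR [Hint _]]]]]]]]].
  exists eta. split; auto. exists (x :: nil). intros y [Hy Hnd] Hyx.
  destruct (Req_dec y x) as [->|Hne]; [left; auto|]. exfalso.
  assert (Hyi : Defs.interior I y)
    by (apply Hint; auto; split; auto; apply Rabs_pos_lt; lra).
  destruct Hnd as [Hnd|Hnd]; [auto|]. apply Hnd.
  destruct (Rabs_def2 _ _ Hyx). intros j Hj.
  destruct (Rle_dec y x); eexists.
  - apply (rises_left_unit_slope n I P x eta aL y HL ltac:(lra) Hyi); auto.
  - apply (rises_right_unit_slope n I P x eta aR y HR ltac:(lra) Hyi); auto.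
Qed.

Lemma locally_unit_slope_derivative_locally_constant :
  forall t, I t -> ~ nondiff_set n I P t ->
    exists eps, 0 < eps /\ exists v : nat -> R,
      forall s, I s -> ~ nondiff_set n I P s -> Rabs (s - t) < eps ->
        forall j, (j < n)%nat -> derivable_pt_lim (Defs.comp P j) s (v j).
Proof.
  intros t Ht Hnd.
  assert (Hti : Defs.interior I t) by (apply NNPP; intros H; apply Hnd; split; auto).
  assert (Htd : differentiable_at n P t) by (apply NNPP; intros H; apply Hnd; split; auto).
  destruct (unit_slope_near n I P t (HP t Ht) Hti Htd) as [a [eta [_ [Heta Hnear]]]].
  exists eta. split; auto. exists (fun j => if Nat.eqb j a then 1 else 0).
  intros s Hs Hnds Hst. apply Hnear; auto.
  apply NNPP. intros H. apply Hnds. split; auto.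
Qed.

Lemma locally_unit_slope_single_slope a b : diff_subinterval n I P a b ->
  exists r, (r < n)%nat /\ forall t, a < t < b -> unit_slope_at n P t r.
Proof.
  intros [Hab [HabI Habd]].
  set (Q := fun s r => (r < n)%nat /\ unit_slope_at n P s r).
  assert (Hu : forall s r r', Q s r -> Q s r' -> r = r').
  { intros s r r' [Hr Hd] [Hr' Hd'].
    pose proof (uniqueness_limite _ _ _ _ (Hd r Hr) (Hd' r Hr)) as E.
    rewrite Nat.eqb_refl in E. destruct (Nat.eqb_spec r r'); auto. lra. }
  assert (Hintab : forall s, a < s < b -> Defs.interior I s).
  { intros s Hs. exists (Rmin (s - a) (b - s)). split; [apply Rmin_glb_lt; lra|].
    intros y Hy. apply HabI. pose proof (Rmin_l (s - a) (b - s)).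
    pose proof (Rmin_r (s - a) (b - s)). destruct (Rabs_def2 _ _ Hy). lra. }
  assert (Hloc : forall t, a < t < b -> exists r eta, 0 < eta /\
                   forall s, a < s < b -> Rabs (s - t) < eta -> Q s r).
  { intros t Ht.
    destruct (unit_slope_near n I P t (HP t (HabI t Ht)) (Hintab t Ht) (Habd t Ht))
      as [r [eta [Hr [Heta Hnear]]]].
    exists r, eta. split; auto. intros s Hs Hst. split; auto. }
  destruct (Hloc ((a + b) / 2) ltac:(lra)) as [r0 [eta0 [He0 Hq0]]].
  assert (HQ0 : Q ((a + b) / 2) r0)
    by (apply Hq0; [lra | rewrite Rminus_diag, Rabs_R0; auto]).
  exists r0. split; [apply HQ0|]. intros t Ht.
  apply (locally_constant_on_interval Q a b ((a + b) / 2) r0 Hu Hloc ltac:(lra) HQ0 t Ht).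
Qed.

Lemma locally_unit_slope_switch q : Defs.interior I q ->
  forall r s, (r < s)%nat -> (s < n)%nat ->
    left_deriv (Defs.comp P r) q 1 -> right_deriv (Defs.comp P s) q 1 ->
    forall j, (r <= j <= s)%nat -> P q j = P q r.
Proof.
  intros Hq r s Hrs Hsn Hl Hr j Hj.
  destruct Hq as [rho [Hrho Hint0]].
  assert (Hq : Defs.interior I q) by (exists rho; auto).
  destruct (HP q (Hint0 q ltac:(rewrite Rminus_diag, Rabs_R0; auto)))
    as [eta [Heta [aL [aR [HaL [HaR [HL [HR [_ Hs3]]]]]]]]].
  set (m := Rmin eta rho).
  assert (Hm : 0 < m) by (apply Rmin_glb_lt; auto).
  pose proof (Rmin_l eta rho). pose proof (Rmin_r eta rho). fold m in H, H0.
  assert (E1 : 1 = if Nat.eqb r aL then 1 else 0).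
  { apply (left_deriv_locally_affine_unique _ _ _ _ m Hm Hl). intros h Hh. unfold Defs.comp.
    rewrite (HL (q + h)); try lia; try lra.
    - rewrite (if_mul_indicator _ (q + h - q)). ring.
    - apply Hint0. replace (q + h - q) with h by ring. rewrite Rabs_left; lra. }
  assert (E2 : 1 = if Nat.eqb s aR then 1 else 0).
  { apply (right_deriv_locally_affine_unique _ _ _ _ m Hm Hr). intros h Hh. unfold Defs.comp.
    rewrite (HR (q + h)); try lia; try lra.
    - rewrite (if_mul_indicator _ (q + h - q)). ring.
    - apply Hint0. replace (q + h - q) with h by ring. rewrite Rabs_right; lra. }
  destruct (Nat.eqb_spec r aL); [|lra]. destruct (Nat.eqb_spec s aR); [|lra]. subst.
  apply Hs3; auto.
Qed.

Theorem n_system_of_locally_unit_slope : cond1 n I P -> n_system n I P.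
Proof.
  intros Hc1. split; [|split; [auto|split]].
  - split; [apply locally_unit_slope_continuous|].
    split; [apply locally_unit_slope_nondiff_discrete|].
    apply locally_unit_slope_derivative_locally_constant.
  - intros a b Hab. destruct (locally_unit_slope_single_slope a b Hab) as [r [Hr Hslope]].
    exists r. split; auto.
  - intros q Hq _. apply locally_unit_slope_switch; auto.
Qed.

End LocallyUnitSlope.

Lemma list_gap (L : list R) x :
  exists g, 0 < g /\ forall y, In y L -> y <> x -> g <= Rabs (y - x).
Proof.
  induction L as [|a L [g [Hg HL]]].
  - exists 1. split; [lra|]. intros y [].
  - destruct (Req_dec a x) as [->|Hne].
    + exists g. split; auto. intros y [<-|Hy] Hyx; [congruence | auto].
    + exists (Rmin g (Rabs (a - x))). split.
      * apply Rmin_glb_lt; auto. apply Rabs_pos_lt. lra.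
      * intros y [<-|Hy] Hyx; [apply Rmin_r|]. eapply Rle_trans; [apply Rmin_l | auto].
Qed.

Section Construction.
Variables (n : nat) (I : R -> Prop) (Pt : R -> nat -> R) (D : R -> Prop).
Hypothesis HI : good_interval I.
Hypothesis HG : gen_n_system n I Pt.
Hypothesis HDI : forall t, D t -> I t.
Hypothesis HDd : discrete_in I D.

Let I_interval : is_interval I := proj1 HI.
Let Pt_continuous : continuous_on n I Pt := proj1 (proj1 HG).
Let Pt_cond1 : cond1 n I Pt := proj1 (proj2 HG).
Let Pt_G2 := proj1 (proj2 (proj2 HG)).
Let Pt_G3 := proj2 (proj2 (proj2 HG)).

Lemma dimension_pos : (0 < n)%nat.
Proof.
  destruct (Nat.eq_dec n 0) as [Hn0|]; [exfalso | lia].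
  destruct (proj2 (proj2 HI)) as [a [b [Hab [Ha Hb]]]].
  pose proof (proj2 (proj2 (Pt_cond1 a Ha))). pose proof (proj2 (proj2 (Pt_cond1 b Hb))).
  rewrite Hn0 in *. simpl in *. lra.
Qed.

Definition special y := I y /\ (D y \/ nondiff_set n I Pt y).

Lemma special_in_I y : special y -> I y.
Proof. intros [H _]; auto. Qed.

Lemma special_discrete : discrete_in I special.
Proof.
  intros x Hx. destruct (HDd x Hx) as [e1 [He1 [l1 Hl1]]].
  destruct (proj1 (proj2 (proj1 HG)) x Hx) as [e2 [He2 [l2 Hl2]]].
  exists (Rmin e1 e2). split; [apply Rmin_glb_lt; auto|]. exists (l1 ++ l2).
  intros y [Hy [Hd|Hd]] Hyx; apply in_or_app.
  - left. apply Hl1; auto. eapply Rlt_le_trans; [exact Hyx | apply Rmin_l].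
  - right. apply Hl2; auto. eapply Rlt_le_trans; [exact Hyx | apply Rmin_r].
Qed.

Lemma special_of_not_interior y : I y -> ~ Defs.interior I y -> special y.
Proof. intros Hy Hint. split; auto. right. split; auto. Qed.

Lemma not_special_interior y : I y -> ~ special y ->
  Defs.interior I y /\ differentiable_at n Pt y.
Proof.
  intros Hy HS. split; apply NNPP; intros H; apply HS; split; auto; right; split; auto.
Qed.

Lemma not_interior_of_min y : I y -> (forall z, I z -> y <= z) -> ~ Defs.interior I y.
Proof.
  intros Hy Hmin [e [He Hi]].
  assert (I (y - e / 2)) by (apply Hi; apply Rabs_def1; lra).
  specialize (Hmin _ H). lra.
Qed.

Lemma not_interior_of_max y : I y -> (forall z, I z -> z <= y) -> ~ Defs.interior I y.
Proof.
  intros Hy Hmax [e [He Hi]].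
  assert (I (y + e / 2)) by (apply Hi; apply Rabs_def1; lra).
  specialize (Hmax _ H). lra.
Qed.

Lemma interior_both_sides x : Defs.interior I x ->
  (exists y, I y /\ y < x) /\ (exists y, I y /\ x < y).
Proof.
  intros [e [He Hi]].
  split; [exists (x - e / 2) | exists (x + e / 2)]; (split; [apply Hi, Rabs_def1 | ]); lra.
Qed.

Lemma special_isolated x : I x ->
  exists rho, 0 < rho /\ forall y, special y -> Rabs (y - x) < rho -> y = x.
Proof.
  intros Hx. destruct (special_discrete x Hx) as [e [He [L HL]]].
  destruct (list_gap L x) as [g [Hg HLg]].
  exists (Rmin e g). split; [apply Rmin_glb_lt; auto|]. intros y Hy Hyx.
  destruct (Req_dec y x); auto. exfalso.
  assert (In y L) by (apply HL; auto; eapply Rlt_le_trans; [exact Hyx | apply Rmin_l]).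
  specialize (HLg y H0 H). pose proof (Rmin_r e g). lra.
Qed.

(* [u] and [w] are the ends of the component of [t] in [I] minus the special points. *)
Definition left_end t u := u < t /\ (forall y, u < y <= t -> I y /\ ~ special y) /\
  (special u \/ ~ I u).
Definition right_end t w := t < w /\ (forall y, t <= y < w -> I y /\ ~ special y) /\
  (special w \/ ~ I w).
Definition unbounded_right t := forall y, t <= y -> I y /\ ~ special y.

Lemma left_end_unique t u1 u2 : left_end t u1 -> left_end t u2 -> u1 = u2.
Proof.
  intros [H1 [H2 H3]] [G1 [G2 G3]].
  destruct (Rtotal_order u1 u2) as [Hl|[He|Hg]]; auto; exfalso.
  - destruct (H2 u2 ltac:(lra)). destruct G3; auto.
  - destruct (G2 u1 ltac:(lra)). destruct H3; auto.
Qed.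

Lemma right_end_unique t w1 w2 : right_end t w1 -> right_end t w2 -> w1 = w2.
Proof.
  intros [H1 [H2 H3]] [G1 [G2 G3]].
  destruct (Rtotal_order w1 w2) as [Hl|[He|Hg]]; auto; exfalso.
  - destruct (G2 w1 ltac:(lra)). destruct H3; auto.
  - destruct (H2 w2 ltac:(lra)). destruct G3; auto.
Qed.

Lemma left_end_special_below t : I t -> ~ special t ->
  (exists z, special z /\ z < t) -> exists u, left_end t u.
Proof.
  intros Ht HSt [z0 Hz0].
  set (E := fun z => special z /\ z < t).
  destruct (completeness E) as [s [Hs1 Hs2]].
  { exists t. intros z [_ Hz]. lra. }
  { exists z0. auto. }
  assert (Hst : s <= t) by (apply Hs2; intros z [_ Hz]; lra).
  assert (Hz0s : z0 <= s) by (apply Hs1; apply Hz0).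
  assert (HIs : I s) by (apply (I_interval z0 s t); auto; apply special_in_I, Hz0).
  destruct (special_isolated s HIs) as [rho [Hrho Hiso]].
  assert (Hx : exists z, E z /\ s - rho < z).
  { apply NNPP. intros Hn. assert (s <= s - rho); [|lra]. apply Hs2. intros z Ez.
    apply Rnot_lt_le. intros Hlt. apply Hn. exists z. auto. }
  destruct Hx as [z [Ez Hz]]. assert (z <= s) by (apply Hs1; auto).
  assert (z = s) by (apply Hiso; [apply Ez | rewrite Rabs_left1; lra]).
  subst z. exists s. destruct Ez as [HSs Hslt]. split; auto. split; [|left; auto].
  intros y Hy. split; [apply (I_interval s y t); auto; lra|].
  intros HSy. destruct (Req_dec y t) as [->|Hne]; auto.
  assert (y <= s) by (apply Hs1; split; auto; lra). lra.
Qed.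

Lemma left_end_at_infimum t : I t -> ~ special t ->
  ~ (exists z, special z /\ z < t) -> exists u, left_end t u.
Proof.
  intros Ht HSt Hno.
  destruct (completeness (fun z => I (- z))) as [m [Hm1 Hm2]].
  { exists 0. intros z Hz. pose proof (proj1 (proj2 HI) _ Hz). lra. }
  { exists (- t). rewrite Ropp_involutive. auto. }
  assert (Hg1 : forall y, I y -> - m <= y).
  { intros y Hy. assert (- y <= m) by (apply Hm1; rewrite Ropp_involutive; auto). lra. }
  assert (Hg2 : forall y, - m < y -> exists z, I z /\ z < y).
  { intros y Hy. apply NNPP. intros Hn. assert (m <= - y); [|lra]. apply Hm2. intros z Hz.
    apply Rnot_lt_le. intros Hlt. apply Hn. exists (- z). split; auto. lra. }
  assert (Hgt : - m < t).
  { destruct (Rle_lt_or_eq_dec (- m) t (Hg1 t Ht)) as [|Heq]; auto. exfalso. apply HSt.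
    apply special_of_not_interior; auto. apply not_interior_of_min; auto.
    intros z Hz. rewrite <- Heq. auto. }
  exists (- m). split; auto. split.
  - intros y Hy. destruct (Hg2 y ltac:(lra)) as [z [Hz1 Hz2]].
    split; [apply (I_interval z y t); auto; lra|].
    intros HSy. destruct (Req_dec y t) as [->|Hne]; auto. apply Hno. exists y. split; auto. lra.
  - destruct (classic (I (- m))) as [HIm|HIm]; [left | right; auto].
    apply special_of_not_interior; auto. apply not_interior_of_min; auto.
Qed.

Lemma left_end_exists t : I t -> ~ special t -> exists u, left_end t u.
Proof.
  intros Ht HSt. destruct (classic (exists z, special z /\ z < t)).
  - apply left_end_special_below; auto.
  - apply left_end_at_infimum; auto.
Qed.

Lemma right_end_special_above t : I t -> ~ special t ->
  (exists z, special z /\ t < z) -> exists w, right_end t w.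
Proof.
  intros Ht HSt [z0 Hz0].
  destruct (completeness (fun z => special (- z) /\ t < - z)) as [m [Hm1 Hm2]].
  { exists (- t). intros z [_ Hz]. lra. }
  { exists (- z0). rewrite Ropp_involutive. auto. }
  set (s := - m).
  assert (Hs1 : forall z, special z -> t < z -> s <= z).
  { intros z Hz1 Hz2. assert (- z <= m) by (apply Hm1; rewrite Ropp_involutive; auto).
    unfold s. lra. }
  assert (Hs2 : forall b, (forall z, special z -> t < z -> b <= z) -> b <= s).
  { intros b Hb. assert (m <= - b); [|unfold s; lra]. apply Hm2. intros z [Hz1 Hz2].
    specialize (Hb _ Hz1 Hz2). lra. }
  clearbody s.
  assert (Hts : t <= s) by (apply Hs2; intros; lra).
  assert (Hsz0 : s <= z0) by (apply Hs1; apply Hz0).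
  assert (HIs : I s) by (apply (I_interval t s z0); auto; apply special_in_I, Hz0).
  destruct (special_isolated s HIs) as [rho [Hrho Hiso]].
  assert (Hx : exists z, special z /\ t < z /\ z < s + rho).
  { apply NNPP. intros Hn. assert (s + rho <= s); [|lra]. apply Hs2. intros z Hz1 Hz2.
    apply Rnot_lt_le. intros Hlt. apply Hn. exists z. auto. }
  destruct Hx as [z [Hz1 [Hz2 Hz3]]]. assert (s <= z) by (apply Hs1; auto).
  assert (z = s) by (apply Hiso; auto; rewrite Rabs_right; lra).
  subst z. exists s. split; [lra|]. split; [|left; auto].
  intros y Hy. split; [apply (I_interval t y s); auto; lra|].
  intros HSy. destruct (Req_dec y t) as [->|Hne]; auto.
  assert (s <= y) by (apply Hs1; auto; lra). lra.
Qed.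

Lemma right_end_at_supremum t : I t -> ~ special t ->
  ~ (exists z, special z /\ t < z) -> (exists M, forall y, I y -> y <= M) ->
  exists w, right_end t w.
Proof.
  intros Ht HSt Hno [M HM].
  destruct (completeness I) as [b [Hb1 Hb2]]; [exists M; auto | exists t; auto|].
  assert (Htb : t < b).
  { destruct (Rle_lt_or_eq_dec t b (Hb1 t Ht)) as [|Heq]; auto. exfalso. apply HSt.
    apply special_of_not_interior; auto. apply not_interior_of_max; auto.
    intros z Hz. rewrite Heq. apply Hb1; auto. }
  exists b. split; auto. split.
  - intros y Hy. assert (Hz : exists z, I z /\ y < z).
    { apply NNPP. intros Hn. assert (b <= y); [|lra]. apply Hb2. intros z Hz.
      apply Rnot_lt_le. intros Hlt. apply Hn. exists z; auto. }
    destruct Hz as [z [Hz1 Hz2]]. split; [apply (I_interval t y z); auto; lra|].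
    intros HSy. destruct (Req_dec y t) as [->|Hne]; auto. apply Hno. exists y. split; auto. lra.
  - destruct (classic (I b)) as [HIb|HIb]; [left | right; auto].
    apply special_of_not_interior; auto. apply not_interior_of_max; auto.
Qed.

Lemma right_end_or_unbounded t : I t -> ~ special t ->
  (exists w, right_end t w) \/ unbounded_right t.
Proof.
  intros Ht HSt. destruct (classic (exists z, special z /\ t < z)) as [Hz|Hno].
  - left. apply right_end_special_above; auto.
  - destruct (classic (exists M, forall y, I y -> y <= M)) as [HM|HnM].
    + left. apply right_end_at_supremum; auto.
    + right. intros y Hy. assert (Hz : exists z, I z /\ y < z).
      { apply NNPP. intros Hn. apply HnM. exists y. intros z Hz. apply Rnot_lt_le.
        intros Hlt. apply Hn. exists z; auto. }
      destruct Hz as [z [Hz1 Hz2]]. split; [apply (I_interval t y z); auto; lra|].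
      intros HSy. destruct (Req_dec y t) as [->|Hne]; auto. apply Hno. exists y. split; auto. lra.
Qed.

(* Every non-special [t] lies in a piece: the open interval from [start t] to [finish t]
   (or to infinity) free of special points. All the data of a piece are read off its
   points by choice and agree on the whole piece ([in_piece_data]). Since (G2) only speaks
   of bounded intervals, the block of an unbounded piece is taken on
   [(start t, start t + 1)]. *)
Definition start t := epsilon (inhabits 0) (left_end t).
Definition finish t := epsilon (inhabits 0) (right_end t).
Definition window_end t :=
  if excluded_middle_informative (unbounded_right t) then start t + 1 else finish t.

Lemma start_spec t : I t -> ~ special t -> left_end t (start t).
Proof. intros. unfold start. apply epsilon_spec. apply left_end_exists; auto. Qed.

Lemma finish_spec t : I t -> ~ special t -> ~ unbounded_right t -> right_end t (finish t).
Proof.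
  intros Ht Hsp HR. unfold finish. apply epsilon_spec.
  destruct (right_end_or_unbounded t Ht Hsp); tauto.
Qed.

Definition in_piece t s := start t < s /\ (unbounded_right t \/ s < finish t).

Lemma in_piece_regular t s : I t -> ~ special t -> in_piece t s -> I s /\ ~ special s.
Proof.
  intros Ht Hsp [H1 H2]. destruct (start_spec t Ht Hsp) as [_ [U2 _]].
  destruct (Rle_dec s t); [apply U2; lra|].
  destruct H2 as [HR|Hw]; [apply HR; lra|].
  destruct (classic (unbounded_right t)) as [HR|HR]; [apply HR; lra|].
  destruct (finish_spec t Ht Hsp HR) as [_ [W2 _]]. apply W2; lra.
Qed.

Lemma in_piece_self t : I t -> ~ special t -> in_piece t t.
Proof.
  intros Ht Hsp. destruct (start_spec t Ht Hsp) as [U1 _]. split; auto.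
  destruct (classic (unbounded_right t)) as [HR|HR]; [left; auto | right].
  apply (finish_spec t Ht Hsp HR).
Qed.

Lemma in_piece_ends t s : I t -> ~ special t -> in_piece t s ->
  start s = start t /\ (unbounded_right s <-> unbounded_right t) /\
  (~ unbounded_right t -> finish s = finish t).
Proof.
  intros Ht Hsp Hs. destruct (in_piece_regular t s Ht Hsp Hs) as [HIs HSs].
  destruct Hs as [Hs1 Hs2].
  assert (Hin : forall y, start t < y -> (unbounded_right t \/ y < finish t) ->
                  I y /\ ~ special y)
    by (intros y Hy1 Hy2; apply (in_piece_regular t y Ht Hsp); split; auto).
  destruct (start_spec t Ht Hsp) as [U1 [U2 U3]].
  assert (E2 : unbounded_right s <-> unbounded_right t).
  { split.
    - intros HRs. apply NNPP. intros HRt. destruct (finish_spec t Ht Hsp HRt) as [W1 [_ W3]].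
      destruct Hs2 as [|Hw]; [tauto|]. destruct (HRs (finish t) ltac:(lra)). destruct W3; auto.
    - intros HRt y Hy. apply Hin; [lra | left; auto]. }
  split; [|split; [exact E2|]].
  - apply (left_end_unique s); [apply start_spec; auto|]. split; auto. split; auto.
    intros y Hy. apply Hin; [lra|]. destruct Hs2; [left | right]; auto; lra.
  - intros HRt. destruct (finish_spec t Ht Hsp HRt) as [W1 [W2 W3]].
    destruct Hs2 as [|Hw]; [tauto|].
    apply (right_end_unique s); [apply finish_spec; auto; rewrite E2; auto|].
    split; auto. split; auto. intros y Hy. apply Hin; [lra | right; lra].
Qed.

Lemma window_end_eq t s : I t -> ~ special t -> in_piece t s -> window_end s = window_end t.
Proof.
  intros Ht Hsp Hs. destruct (in_piece_ends t s Ht Hsp Hs) as [E1 [E2 E3]].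
  unfold window_end.
  destruct (excluded_middle_informative (unbounded_right s));
    destruct (excluded_middle_informative (unbounded_right t)); try tauto.
  rewrite E1; auto.
Qed.

Lemma window_end_spec t : I t -> ~ special t ->
  start t < window_end t /\ forall s, start t < s < window_end t -> in_piece t s.
Proof.
  intros Ht Hsp. destruct (start_spec t Ht Hsp) as [U1 _]. unfold window_end.
  destruct (excluded_middle_informative (unbounded_right t)) as [HR|HR].
  - split; [lra|]. intros s Hs. split; [lra | left; auto].
  - destruct (finish_spec t Ht Hsp HR) as [W1 _].
    split; [lra|]. intros s Hs. split; [lra | right; lra].
Qed.

Lemma in_piece_diff_subinterval t a b : I t -> ~ special t -> a < b ->
  (forall s, a < s < b -> in_piece t s) -> diff_subinterval n I Pt a b.
Proof.
  intros Ht Hsp Hab Hs. split; auto. split.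
  - intros s H. apply (in_piece_regular t s Ht Hsp (Hs s H)).
  - intros s H. destruct (in_piece_regular t s Ht Hsp (Hs s H)).
    apply not_special_interior; auto.
Qed.

Definition block_on a b (p : nat * nat) := (fst p <= snd p)%nat /\ (snd p < n)%nat /\
  forall s, a < s < b ->
    (forall j, (fst p <= j <= snd p)%nat -> Pt s j = Pt s (fst p)) /\
    (forall j, (j < n)%nat ->
       derivable_pt_lim (Defs.comp Pt j) s (block_slope (fst p) (snd p) j)).

Definition piece_block t :=
  epsilon (inhabits (0%nat, 0%nat)) (block_on (start t) (window_end t)).
Definition block_lo t := fst (piece_block t).
Definition block_hi t := snd (piece_block t).
Definition slope t j := block_slope (block_lo t) (block_hi t) j.
Definition block_size t := INR (block_hi t - block_lo t + 1).
Definition step t :=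
  if excluded_middle_informative (unbounded_right t) then 1
  else (finish t - start t) / block_size t.

Lemma piece_block_spec t : I t -> ~ special t ->
  block_on (start t) (window_end t) (piece_block t).
Proof.
  intros Ht Hsp. unfold piece_block. apply epsilon_spec.
  destruct (window_end_spec t Ht Hsp) as [H1 H2].
  destruct (Pt_G2 (start t) (window_end t) (in_piece_diff_subinterval t _ _ Ht Hsp H1 H2))
    as [l [h [Hlh [Hh Hd]]]].
  exists (l, h). split; auto.
Qed.

Lemma block_bounds t : I t -> ~ special t ->
  (block_lo t <= block_hi t)%nat /\ (block_hi t < n)%nat.
Proof. intros Ht Hsp. destruct (piece_block_spec t Ht Hsp) as [H1 [H2 _]]. split; auto. Qed.

Lemma block_size_ge1 t : 1 <= block_size t.
Proof.
  unfold block_size.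
  replace (block_hi t - block_lo t + 1)%nat with (S (block_hi t - block_lo t)) by lia.
  rewrite S_INR. pose proof (pos_INR (block_hi t - block_lo t)). lra.
Qed.

Lemma slope_in t j : (block_lo t <= j <= block_hi t)%nat -> slope t j = 1 / block_size t.
Proof.
  intros H. unfold slope, block_slope, block_size. apply in_block_iff in H. rewrite H. auto.
Qed.

Lemma slope_out t j : ~ (block_lo t <= j <= block_hi t)%nat -> slope t j = 0.
Proof. intros H. unfold slope, block_slope. apply in_block_false in H. rewrite H. auto. Qed.

Lemma step_pos t : I t -> ~ special t -> 0 < step t.
Proof.
  intros Ht Hsp. unfold step.
  destruct (excluded_middle_informative (unbounded_right t)) as [HR|HR]; [lra|].
  destruct (start_spec t Ht Hsp) as [U1 _]. destruct (finish_spec t Ht Hsp HR) as [W1 _].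
  pose proof (block_size_ge1 t). apply Rdiv_lt_0_compat; lra.
Qed.

Lemma step_finite t : ~ unbounded_right t -> block_size t * step t = finish t - start t.
Proof.
  intros HR. unfold step.
  destruct (excluded_middle_informative (unbounded_right t)) as [|_]; [tauto|].
  pose proof (block_size_ge1 t). field. lra.
Qed.

Lemma in_piece_data t s : I t -> ~ special t -> in_piece t s ->
  start s = start t /\ block_lo s = block_lo t /\ block_hi s = block_hi t /\
  step s = step t /\ (forall j, slope s j = slope t j).
Proof.
  intros Ht Hsp Hs. destruct (in_piece_ends t s Ht Hsp Hs) as [E1 [E2 E3]].
  assert (Eb : piece_block s = piece_block t)
    by (unfold piece_block; rewrite (window_end_eq t s Ht Hsp Hs), E1; auto).
  assert (El : block_lo s = block_lo t) by (unfold block_lo; rewrite Eb; auto).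
  assert (Eh : block_hi s = block_hi t) by (unfold block_hi; rewrite Eb; auto).
  split; auto. split; auto. split; auto. split.
  - unfold step, block_size. rewrite El, Eh.
    destruct (excluded_middle_informative (unbounded_right s));
      destruct (excluded_middle_informative (unbounded_right t)); try tauto.
    rewrite E3, E1; auto.
  - intros j. unfold slope. rewrite El, Eh. auto.
Qed.

Lemma slope_deriv t s : I t -> ~ special t -> in_piece t s -> forall j, (j < n)%nat ->
  derivable_pt_lim (Defs.comp Pt j) s (slope t j).
Proof.
  intros Ht Hsp Hs j Hj. destruct (window_end_spec t Ht Hsp) as [Hw1 Hw2].
  destruct (piece_block_spec t Ht Hsp) as [_ [_ Hblock]].
  destruct (classic (unbounded_right t)) as [HR|HR].
  - assert (Hsu : start t < s) by apply Hs.
    destruct (Pt_G2 (start t) (s + 1)) as [l' [h' [_ [_ Hd']]]].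
    { apply (in_piece_diff_subinterval t); auto; [lra|].
      intros r Hr. split; [lra | left; auto]. }
    assert (Hm : start t < start t + 1 / 2 < window_end t).
    { unfold window_end in *.
      destruct (excluded_middle_informative (unbounded_right t)); [lra | tauto]. }
    pose proof (uniqueness_limite _ _ _ _ (proj2 (Hblock _ Hm) j Hj)
                  (proj2 (Hd' (start t + 1 / 2) ltac:(lra)) j Hj)) as Eq.
    unfold slope, block_lo, block_hi. rewrite Eq. apply (proj2 (Hd' s ltac:(lra)) j Hj).
  - assert (Hs' : start t < s < window_end t).
    { unfold window_end. destruct (excluded_middle_informative (unbounded_right t)); [tauto|].
      destruct Hs as [? [|]]; [tauto | lra]. }
    apply (proj2 (Hblock s Hs') j Hj).
Qed.

Lemma Pt_affine_in_piece t s s' j : I t -> ~ special t -> in_piece t s -> in_piece t s' ->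
  (j < n)%nat -> Pt s' j - Pt s j = slope t j * (s' - s).
Proof.
  intros Ht Hsp Hs Hs' Hj.
  assert (Hmvt : forall a b, in_piece t a -> in_piece t b -> a < b ->
                   Pt b j - Pt a j = slope t j * (b - a)).
  { intros a b [Ha1 Ha2] [Hb1 Hb2] Hab.
    destruct (MVT_cor2 (Defs.comp Pt j) (fun _ => slope t j) a b Hab) as [c [Hc _]]; auto.
    intros c Hc. apply slope_deriv; auto. split; [lra|]. destruct Hb2; [left; auto | right; lra]. }
  destruct (Rtotal_order s s') as [Hl|[->|Hg]].
  - apply Hmvt; auto.
  - ring.
  - rewrite <- (Ropp_involutive (Pt s' j - Pt s j)), Ropp_minus_distr, Hmvt; auto. ring.
Qed.

(* The affine expression of [Pt] on the piece, evaluated at its start. *)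
Definition base t j := Pt t j - slope t j * (t - start t).

Lemma Pt_in_piece t s j : I t -> ~ special t -> in_piece t s -> (j < n)%nat ->
  Pt s j = base t j + slope t j * (s - start t).
Proof.
  intros Ht Hsp Hs Hj.
  pose proof (Pt_affine_in_piece t t s j Ht Hsp (in_piece_self t Ht Hsp) Hs Hj). unfold base. lra.
Qed.

Lemma Pt_at_start t j : I t -> ~ special t -> I (start t) -> (j < n)%nat ->
  Pt (start t) j = base t j.
Proof.
  intros Ht Hsp Hu Hj. destruct (start_spec t Ht Hsp) as [U1 _].
  apply (affine_limit_value (fun y => Pt y j) (start t) (base t j) (slope t j) I).
  - intros eps Heps. apply (Pt_continuous j (start t) Hj Hu eps Heps).
  - intros h Hh. set (y := start t + Rmin h (t - start t) / 2).
    assert (0 < Rmin h (t - start t)) by (apply Rmin_glb_lt; lra).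
    pose proof (Rmin_l h (t - start t)). pose proof (Rmin_r h (t - start t)).
    assert (Hy : in_piece t y).
    { split; [unfold y; lra|].
      destruct (in_piece_self t Ht Hsp) as [_ [|]]; [left; auto | right; unfold y; lra]. }
    exists y. split; [apply Rabs_def1; unfold y; lra|].
    split; [apply (in_piece_regular t y Ht Hsp Hy) | apply Pt_in_piece; auto].
Qed.

Lemma Pt_at_finish t j : I t -> ~ special t -> ~ unbounded_right t -> I (finish t) ->
  (j < n)%nat -> Pt (finish t) j = base t j + slope t j * (finish t - start t).
Proof.
  intros Ht Hsp HR Hw Hj. destruct (finish_spec t Ht Hsp HR) as [W1 _].
  destruct (start_spec t Ht Hsp) as [U1 _].
  apply (affine_limit_value (fun y => Pt y j) (finish t) _ (slope t j) I).
  - intros eps Heps. apply (Pt_continuous j (finish t) Hj Hw eps Heps).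
  - intros h Hh. set (y := finish t - Rmin h (finish t - t) / 2).
    assert (0 < Rmin h (finish t - t)) by (apply Rmin_glb_lt; lra).
    pose proof (Rmin_l h (finish t - t)). pose proof (Rmin_r h (finish t - t)).
    assert (Hy : in_piece t y) by (split; unfold y; [lra | right; lra]).
    exists y. split; [apply Rabs_def1; unfold y; lra|].
    split; [apply (in_piece_regular t y Ht Hsp Hy)|]. rewrite (Pt_in_piece t y j); auto. ring.
Qed.

Lemma Pt_on_closed_piece t s j : I t -> ~ special t -> I s -> start t <= s ->
  (unbounded_right t \/ s <= finish t) -> (j < n)%nat ->
  Pt s j = base t j + slope t j * (s - start t).
Proof.
  intros Ht Hsp Hs H1 H2 Hj.
  destruct (Rle_lt_or_eq_dec _ _ H1) as [H1'|<-]; [|rewrite Pt_at_start; auto; ring].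
  destruct (classic (unbounded_right t)) as [HR|HR]; [apply Pt_in_piece; auto; split; auto|].
  destruct H2 as [|H2]; [tauto|].
  destruct (Rle_lt_or_eq_dec _ _ H2) as [H2' | ->];
    [apply Pt_in_piece; auto; split; auto | apply Pt_at_finish; auto].
Qed.

Lemma base_block t j : I t -> ~ special t -> (block_lo t <= j <= block_hi t)%nat ->
  base t j = base t (block_lo t).
Proof.
  intros Ht Hsp Hj. destruct (window_end_spec t Ht Hsp) as [Hw1 Hw2].
  destruct (block_bounds t Ht Hsp) as [Hb1 Hb2].
  destruct (piece_block_spec t Ht Hsp) as [_ [_ Hblock]].
  set (m := (start t + window_end t) / 2).
  assert (Hm : start t < m < window_end t) by (unfold m; lra).
  pose proof (proj1 (Hblock m Hm) j Hj) as Heq. fold (block_lo t) in Heq.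
  rewrite (Pt_in_piece t m j), (Pt_in_piece t m (block_lo t)) in Heq by (auto; lia).
  rewrite (slope_in t j), (slope_in t (block_lo t)) in Heq by lia.
  lra.
Qed.

Lemma base_ordered t j : I t -> ~ special t -> (S j < n)%nat -> base t j <= base t (S j).
Proof.
  intros Ht Hsp Hj. destruct (in_piece_self t Ht Hsp) as [Hs1 Hs2].
  apply (Rle_of_affine_le_right _ _ (slope t j) (slope t (S j)) (t - start t)); [lra|].
  intros h Hh.
  assert (Hy : in_piece t (start t + h))
    by (split; [lra | destruct Hs2; [left | right]; auto; lra]).
  replace (base t j + slope t j * h) with (Pt (start t + h) j)
    by (rewrite (Pt_in_piece t _ j) by (auto; lia); f_equal; ring).
  replace (base t (S j) + slope t (S j) * h) with (Pt (start t + h) (S j))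
    by (rewrite (Pt_in_piece t _ (S j)) by (auto; lia); f_equal; ring).
  apply (Pt_cond1 _ (proj1 (in_piece_regular t _ Ht Hsp Hy))); auto.
Qed.

Lemma base_nonneg t : I t -> ~ special t -> 0 <= base t 0.
Proof.
  intros Ht Hsp. destruct (in_piece_self t Ht Hsp) as [Hs1 Hs2].
  apply (Rle_of_affine_le_right _ _ 0 (slope t 0) (t - start t)); [lra|].
  intros h Hh.
  assert (Hy : in_piece t (start t + h))
    by (split; [lra | destruct Hs2; [left | right]; auto; lra]).
  replace (base t 0 + slope t 0 * h) with (Pt (start t + h) 0)
    by (rewrite (Pt_in_piece t _ 0) by (auto; apply dimension_pos); f_equal; ring).
  rewrite Rmult_0_l, Rplus_0_l. apply (Pt_cond1 _ (proj1 (in_piece_regular t _ Ht Hsp Hy))).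
Qed.

Lemma finish_ordered t j : I t -> ~ special t -> ~ unbounded_right t -> (S j < n)%nat ->
  base t j + slope t j * (finish t - start t) <=
  base t (S j) + slope t (S j) * (finish t - start t).
Proof.
  intros Ht Hsp HR Hj. destruct (in_piece_self t Ht Hsp) as [Hs1 Hs2].
  destruct (finish_spec t Ht Hsp HR) as [W1 _].
  apply (Rle_of_affine_le_right _ _ (- slope t j) (- slope t (S j)) (finish t - t)); [lra|].
  intros h Hh. assert (Hy : in_piece t (finish t - h)) by (split; [lra | right; lra]).
  replace (base t j + slope t j * (finish t - start t) + - slope t j * h)
    with (Pt (finish t - h) j) by (rewrite (Pt_in_piece t _ j) by (auto; lia); ring).
  replace (base t (S j) + slope t (S j) * (finish t - start t) + - slope t (S j) * h)
    with (Pt (finish t - h) (S j)) by (rewrite (Pt_in_piece t _ (S j)) by (auto; lia); ring).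
  apply (Pt_cond1 _ (proj1 (in_piece_regular t _ Ht Hsp Hy))); auto.
Qed.

(* Otherwise component [block_hi t], rising forever, would overtake the constant
   component [S (block_hi t)]. *)
Lemma unbounded_block_hi_last t : I t -> ~ special t -> unbounded_right t ->
  ~ (S (block_hi t) < n)%nat.
Proof.
  intros Ht Hsp HR Hlt. destruct (block_bounds t Ht Hsp) as [Hb1 Hb2].
  destruct (in_piece_self t Ht Hsp) as [Hs1 _].
  pose proof (block_size_ge1 t) as Hk.
  set (gap := Rabs (base t (S (block_hi t)) - base t (block_hi t)) + 1).
  pose proof (Rle_abs (base t (S (block_hi t)) - base t (block_hi t))).
  pose proof (Rabs_pos (base t (S (block_hi t)) - base t (block_hi t))).
  set (s := t + block_size t * gap).
  assert (Hs : in_piece t s) by (split; [unfold s, gap in *; nra | left; auto]).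
  pose proof (proj1 (proj2 (Pt_cond1 s (proj1 (in_piece_regular t _ Ht Hsp Hs)))) _ Hlt) as Ho.
  rewrite (Pt_in_piece t s (block_hi t)), (Pt_in_piece t s (S (block_hi t))) in Ho by (auto; lia).
  rewrite (slope_in t (block_hi t)), (slope_out t (S (block_hi t))) in Ho by lia.
  assert (1 / block_size t * (s - start t) = (t - start t) / block_size t + gap)
    by (unfold s; field; lra).
  assert (0 <= (t - start t) / block_size t)
    by (apply Rmult_le_pos; [lra | apply Rlt_le, Rinv_0_lt_compat; lra]).
  unfold gap in *. lra.
Qed.

Definition correction t j :=
  - slope t j * (t - start t) + staircase (block_lo t) (block_hi t) (step t) (t - start t) j.
Definition stair t j := if excluded_middle_informative (special t) then Pt t j
  else Pt t j + correction t j.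

Lemma stair_special t j : special t -> stair t j = Pt t j.
Proof. intros H. unfold stair. destruct (excluded_middle_informative (special t)); tauto. Qed.

Lemma stair_not_special t j : ~ special t -> stair t j = Pt t j + correction t j.
Proof. intros H. unfold stair. destruct (excluded_middle_informative (special t)); tauto. Qed.

Lemma stair_in_piece t s j : I t -> ~ special t -> in_piece t s -> (j < n)%nat ->
  stair s j = base t j + staircase (block_lo t) (block_hi t) (step t) (s - start t) j.
Proof.
  intros Ht Hsp Hs Hj. destruct (in_piece_regular t s Ht Hsp Hs) as [HIs HSs].
  destruct (in_piece_data t s Ht Hsp Hs) as [E1 [E2 [E3 [E4 E5]]]].
  rewrite stair_not_special by auto. unfold correction. rewrite E1, E2, E3, E4, E5.
  rewrite (Pt_in_piece t s j) by auto. ring.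
Qed.

Lemma staircase_full t j : I t -> ~ special t ->
  staircase (block_lo t) (block_hi t) (step t) (block_size t * step t) j =
  slope t j * (block_size t * step t).
Proof.
  intros Ht Hsp. destruct (block_bounds t Ht Hsp). pose proof (step_pos t Ht Hsp).
  pose proof (block_size_ge1 t).
  rewrite staircase_last_step by (auto; unfold block_size in *; nra). unfold slope, block_slope.
  fold (block_size t).
  destruct (in_block (block_lo t) (block_hi t) j); destruct (Nat.eqb j (block_lo t));
    unfold block_size; field; fold (block_size t); lra.
Qed.

Lemma stair_locally_unit_slope_regular x : I x -> ~ special x -> locally_unit_slope n I stair x.
Proof.
  intros Hx Hsp. destruct (block_bounds x Hx Hsp) as [Hb1 Hb2].
  pose proof (step_pos x Hx Hsp) as Hdl.
  destruct (in_piece_self x Hx Hsp) as [Hu Hw].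
  destruct (staircase_slopes (block_lo x) (block_hi x) (step x) (x - start x) Hb1 Hdl ltac:(lra))
    as [etaL [etaR [aL [aR [HeL [HeR [Hfin [HaL [HaR [Hleft [Hright Hlevel]]]]]]]]]]].
  exists (Rmin etaL etaR). assert (Hm: 0 < Rmin etaL etaR) by (apply Rmin_glb_lt; lra).
  assert (Hm1: Rmin etaL etaR <= etaL) by apply Rmin_l.
  assert (Hm2: Rmin etaL etaR <= etaR) by apply Rmin_r.
  assert (Hin: forall y, x - Rmin etaL etaR < y < x + Rmin etaL etaR -> in_piece x y).
  { intros y Hy. split; [lra|].
    destruct (classic (unbounded_right x)) as [HR|HR]; [left; auto | right].
    destruct Hw as [|Hw]; [tauto|].
    destruct (Rle_dec y x); [lra|].
    pose proof (step_finite x HR). unfold block_size in H. specialize (Hfin ltac:(lra)). lra. }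
  split; auto. exists aL, aR. split; [lia|]. split; [lia|]. split; [|split; [|split]].
  - intros y Hy Hyx j Hj. destruct (Req_dec y x) as [->|Hne]; [destruct (Nat.eqb j aL); ring|].
    rewrite (stair_in_piece x y j), (stair_in_piece x x j)
      by (auto; try apply in_piece_self; auto; apply Hin; lra).
    rewrite (Hleft (y - start x)) by lra.
    replace (y - start x - (x - start x)) with (y - x) by ring.
    ring.
  - intros y Hy Hyx j Hj. destruct (Req_dec y x) as [->|Hne]; [destruct (Nat.eqb j aR); ring|].
    rewrite (stair_in_piece x y j), (stair_in_piece x x j)
      by (auto; try apply in_piece_self; auto; apply Hin; lra).
    rewrite (Hright (y - start x)) by lra.
    replace (y - start x - (x - start x)) with (y - x) by ring.
    ring.
  - intros y Hy Hyx. assert (in_piece x y).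
    { apply Hin. destruct (Rabs_def2 _ _ (proj2 Hyx)). lra. }
    destruct (in_piece_regular x y Hx Hsp H). apply not_special_interior; auto.
  - intros _ Hlt j Hj.
    rewrite (stair_in_piece x x j), (stair_in_piece x x aL)
      by (auto; try apply in_piece_self; auto; lia).
    rewrite (Hlevel Hlt j), (Hlevel Hlt aL) by lia.
    rewrite (base_block x j), (base_block x aL) by (auto; lia). auto.
Qed.

Lemma piece_ending_at x : special x -> (exists y0, I y0 /\ y0 < x) ->
  exists t, I t /\ ~ special t /\ t < x /\ ~ unbounded_right t /\ finish t = x.
Proof.
  intros HSx [y0 [Hy0 Hy0x]]. pose proof (special_in_I x HSx) as Hx.
  destruct (special_isolated x Hx) as [rho [Hrho Hiso]].
  set (t := Rmax y0 (x - rho/2)).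
  assert (Ht1: y0 <= t) by apply Rmax_l. assert (Ht2: x - rho/2 <= t) by apply Rmax_r.
  assert (Ht3: t < x) by (unfold t, Rmax; destruct Rle_dec; lra).
  assert (HIt: I t) by (apply (I_interval y0 t x); auto; lra).
  assert (HSt: ~ special t).
  { intros HSt. assert (t = x) by (apply Hiso; auto; rewrite Rabs_left; lra). lra. }
  assert (HR: ~ unbounded_right t). { intros HR. destruct (HR x ltac:(lra)). tauto. }
  exists t. split; auto. split; auto. split; auto. split; auto.
  destruct (finish_spec t HIt HSt HR) as [W1 [W2 W3]].
  destruct (Rtotal_order (finish t) x) as [Hl|[He|Hg]]; auto; exfalso.
  - assert (I (finish t)) by (apply (I_interval t (finish t) x); auto; lra).
    destruct W3 as [W3|W3]; [|tauto].
    assert (finish t = x) by (apply Hiso; auto; rewrite Rabs_left; lra). lra.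
  - destruct (W2 x ltac:(lra)). tauto.
Qed.

Lemma piece_starting_at x : special x -> (exists y1, I y1 /\ x < y1) ->
  exists t, I t /\ ~ special t /\ x < t /\ start t = x.
Proof.
  intros HSx [y1 [Hy1 Hy1x]]. pose proof (special_in_I x HSx) as Hx.
  destruct (special_isolated x Hx) as [rho [Hrho Hiso]].
  set (t := Rmin y1 (x + rho/2)).
  assert (Ht1: t <= y1) by apply Rmin_l. assert (Ht2: t <= x + rho/2) by apply Rmin_r.
  assert (Ht3: x < t) by (unfold t, Rmin; destruct Rle_dec; lra).
  assert (HIt: I t) by (apply (I_interval x t y1); auto; lra).
  assert (HSt: ~ special t).
  { intros HSt. assert (t = x) by (apply Hiso; auto; rewrite Rabs_right; lra). lra. }
  exists t. split; auto. split; auto. split; auto.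
  destruct (start_spec t HIt HSt) as [U1 [U2 U3]].
  destruct (Rtotal_order (start t) x) as [Hl|[He|Hg]]; auto; exfalso.
  - destruct (U2 x ltac:(lra)). tauto.
  - assert (I (start t)) by (apply (I_interval x (start t) t); auto; lra).
    destruct U3 as [U3|U3]; [|tauto].
    assert (start t = x) by (apply Hiso; auto; rewrite Rabs_right; lra). lra.
Qed.

Lemma stair_rises_left x t : special x -> I t -> ~ special t -> t < x ->
  ~ unbounded_right t -> finish t = x -> rises_left n I stair x (step t) (block_lo t).
Proof.
  intros HSx Ht HSt Htx HR Hw y Hy Hyx j Hj.
  destruct (Req_dec y x) as [->|Hne]; [destruct (Nat.eqb j (block_lo t)); ring|].
  pose proof (step_finite t HR) as Hf. pose proof (block_size_ge1 t).
  pose proof (step_pos t Ht HSt).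
  destruct (block_bounds t Ht HSt).
  assert (Hin: in_piece t y) by (split; [nra|right; lra]).
  rewrite (stair_in_piece t y j) by auto. rewrite stair_special by auto.
  rewrite <- Hw. rewrite Pt_at_finish by (auto; rewrite Hw; apply special_in_I; auto).
  rewrite <- Hf. rewrite <- staircase_full by auto.
  rewrite !staircase_last_step by (auto; unfold block_size in *; nra).
  replace (y - start t) with (block_size t * step t + (y - finish t)) by lra. unfold block_size.
  rewrite Hw.
  destruct (in_block (block_lo t) (block_hi t) j); destruct (Nat.eqb j (block_lo t)); ring.
Qed.

Lemma stair_rises_right x t : special x -> I t -> ~ special t -> x < t -> start t = x ->
  rises_right n I stair x (step t) (block_hi t).
Proof.
  intros HSx Ht HSt Htx Hu y Hy Hyx j Hj.
  destruct (Req_dec y x) as [->|Hne]; [destruct (Nat.eqb j (block_hi t)); ring|].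
  pose proof (block_size_ge1 t). pose proof (step_pos t Ht HSt).
  destruct (block_bounds t Ht HSt).
  assert (Hin: in_piece t y).
  { split; [lra|]. destruct (classic (unbounded_right t)) as [HR|HR]; [left; auto|right].
    pose proof (step_finite t HR). nra. }
  rewrite (stair_in_piece t y j) by auto. rewrite stair_special by auto.
  replace (Pt x j) with (Pt (start t) j) by (rewrite Hu; auto).
  rewrite Pt_at_start by (auto; rewrite Hu; apply special_in_I; auto).
  rewrite staircase_first_step by (auto; lra). rewrite Hu. destruct (Nat.eqb j (block_hi t)); ring.
Qed.

Lemma Pt_affine_before_finish t i h : I t -> ~ special t -> ~ unbounded_right t ->
  I (finish t) -> (i < n)%nat -> - step t < h < 0 ->
  Pt (finish t + h) i - Pt (finish t) i = slope t i * h.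
Proof.
  intros Ht Hsp HR Hw Hi Hh. pose proof (step_finite t HR). pose proof (block_size_ge1 t).
  pose proof (step_pos t Ht Hsp).
  assert (Hin : in_piece t (finish t + h)) by (split; [nra | right; lra]).
  rewrite (Pt_in_piece t _ i), Pt_at_finish by auto. ring.
Qed.

Lemma Pt_affine_after_start t i h : I t -> ~ special t -> I (start t) -> (i < n)%nat ->
  0 < h < step t -> Pt (start t + h) i - Pt (start t) i = slope t i * h.
Proof.
  intros Ht Hsp Hu Hi Hh. pose proof (block_size_ge1 t). pose proof (step_pos t Ht Hsp).
  assert (Hin : in_piece t (start t + h)).
  { split; [lra|]. destruct (classic (unbounded_right t)) as [HR|HR]; [left; auto | right].
    pose proof (step_finite t HR). nra. }
  rewrite (Pt_in_piece t _ i), Pt_at_start by auto. ring.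
Qed.

(* If [Pt] is not differentiable at [x] this is (G3). Otherwise the slope of component
   [block_hi tR] is the same on both sides, so it belongs to the left block too, and the
   left block is level at [x]. *)
Lemma Pt_switch_at_special x tL tR : special x -> Defs.interior I x ->
  I tL -> ~ special tL -> ~ unbounded_right tL -> finish tL = x ->
  I tR -> ~ special tR -> start tR = x ->
  (block_lo tL < block_hi tR)%nat -> forall j, (block_lo tL <= j <= block_hi tR)%nat ->
    Pt x j = Pt x (block_lo tL).
Proof.
  intros HSx Hint HtL HSL HR Hw HtR HSR Hu Hlt j Hj.
  pose proof (special_in_I x HSx) as Hx.
  destruct (block_bounds tL HtL HSL) as [BL1 BL2]. destruct (block_bounds tR HtR HSR) as [BR1 BR2].
  pose proof (step_pos tL HtL HSL) as HdL. pose proof (step_pos tR HtR HSR) as HdR.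
  assert (AffL : forall i, (i < n)%nat -> forall h, - step tL < h < 0 ->
                   Pt (x + h) i - Pt x i = slope tL i * h)
    by (intros; rewrite <- Hw; apply Pt_affine_before_finish; auto; rewrite Hw; auto).
  assert (AffR : forall i, (i < n)%nat -> forall h, 0 < h < step tR ->
                   Pt (x + h) i - Pt x i = slope tR i * h)
    by (intros; rewrite <- Hu; apply Pt_affine_after_start; auto; rewrite Hu; auto).
  destruct (classic (differentiable_at n Pt x)) as [Hd|Hnd].
  - destruct (Hd (block_hi tR) BR2) as [l Hl].
    pose proof (left_deriv_locally_affine_unique _ _ _ _ _ HdL (derivable_left_deriv _ _ _ Hl)
                  (AffL _ BR2)) as E1.
    pose proof (right_deriv_locally_affine_unique _ _ _ _ _ HdR (derivable_right_deriv _ _ _ Hl)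
                  (AffR _ BR2)) as E2.
    rewrite (slope_in tR) in E2 by lia. pose proof (block_size_ge1 tR).
    assert (HhL : (block_hi tR <= block_hi tL)%nat).
    { destruct (Compare_dec.le_dec (block_hi tR) (block_hi tL)); auto.
      rewrite slope_out in E1 by lia.
      assert (0 < 1 / block_size tR) by (apply Rdiv_lt_0_compat; lra). lra. }
    pose proof (proj1 (start_spec tL HtL HSL)) as UL.
    pose proof (proj1 (finish_spec tL HtL HSL HR)) as WL.
    rewrite (Pt_on_closed_piece tL x j), (Pt_on_closed_piece tL x (block_lo tL))
      by (auto; try lia; lra).
    rewrite (base_block tL j) by (auto; lia).
    rewrite (slope_in tL j), (slope_in tL (block_lo tL)) by lia. auto.
  - apply (Pt_G3 x Hint Hnd (block_lo tL) (block_hi tL) (block_lo tR) (block_hi tR)); auto.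
    + intros i Hi. apply (left_deriv_locally_affine _ _ _ (step tL) HdL), AffL; auto.
    + intros i Hi. apply (right_deriv_locally_affine _ _ _ (step tR) HdR), AffR; auto.
Qed.

Lemma stair_left_at_special x : special x -> exists eta a, 0 < eta /\ (a < n)%nat /\
  rises_left n I stair x eta a /\
  ((exists y, I y /\ y < x) -> exists t, I t /\ ~ special t /\ t < x /\
     ~ unbounded_right t /\ finish t = x /\ a = block_lo t).
Proof.
  intros HSx. destruct (classic (exists y, I y /\ y < x)) as [HL|HL].
  - destruct (piece_ending_at x HSx HL) as [t [Ht [HSt [Htx [HR Hw]]]]].
    exists (step t), (block_lo t). split; [apply step_pos; auto|].
    split; [destruct (block_bounds t Ht HSt); lia|].
    split; [apply stair_rises_left; auto|]. intros _. exists t. tauto.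
  - exists 1, 0%nat. split; [lra|]. split; [apply dimension_pos|].
    split; [apply rises_left_of_min; auto | tauto].
Qed.

Lemma stair_right_at_special x : special x -> exists eta a, 0 < eta /\ (a < n)%nat /\
  rises_right n I stair x eta a /\
  ((exists y, I y /\ x < y) -> exists t, I t /\ ~ special t /\ x < t /\
     start t = x /\ a = block_hi t).
Proof.
  intros HSx. destruct (classic (exists y, I y /\ x < y)) as [HR|HR].
  - destruct (piece_starting_at x HSx HR) as [t [Ht [HSt [Hxt Hu]]]].
    exists (step t), (block_hi t). split; [apply step_pos; auto|].
    split; [destruct (block_bounds t Ht HSt); lia|].
    split; [apply stair_rises_right; auto|]. intros _. exists t. tauto.
  - exists 1, 0%nat. split; [lra|]. split; [apply dimension_pos|].
    split; [apply rises_right_of_max; auto | tauto].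
Qed.

Lemma stair_locally_unit_slope_special x : special x -> locally_unit_slope n I stair x.
Proof.
  intros HSx. pose proof (special_in_I x HSx) as Hx.
  destruct (special_isolated x Hx) as [rho [Hrho Hiso]].
  destruct (stair_left_at_special x HSx) as [etaL [aL [HeL [HaL [HL HtL]]]]].
  destruct (stair_right_at_special x HSx) as [etaR [aR [HeR [HaR [HR HtR]]]]].
  set (eta := Rmin rho (Rmin etaL etaR)).
  assert (He1 : eta <= rho) by apply Rmin_l.
  assert (He2 : eta <= Rmin etaL etaR) by apply Rmin_r.
  pose proof (Rmin_l etaL etaR). pose proof (Rmin_r etaL etaR).
  assert (He0 : 0 < eta) by (unfold eta; repeat apply Rmin_glb_lt; auto).
  exists eta. split; auto. exists aL, aR. split; auto. split; auto.
  split; [apply (rises_left_shrink _ _ _ _ etaL); auto; lra|].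
  split; [apply (rises_right_shrink _ _ _ _ etaR); auto; lra|].
  split.
  - intros y Hy Hyx. apply not_special_interior; auto.
    intros HSy. pose proof (Hiso y HSy ltac:(lra)). subst y.
    rewrite Rminus_diag, Rabs_R0 in Hyx. lra.
  - intros Hint Hlt j Hj. destruct (interior_both_sides x Hint) as [Hleft Hright].
    destruct (HtL Hleft) as [tL [? [? [_ [? [? ->]]]]]].
    destruct (HtR Hright) as [tR [? [? [_ [? ->]]]]].
    rewrite !stair_special by auto. apply (Pt_switch_at_special x tL tR); auto.
Qed.

(* The block loses [e] in total and the staircase gains [min e (k d) + max 0 (e - k d) = e]. *)
Lemma sumR_correction q : I q -> ~ special q -> sumR (correction q) n = 0.
Proof.
  intros Hq Hsp. destruct (block_bounds q Hq Hsp) as [Hb1 Hb2]. pose proof (step_pos q Hq Hsp).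
  pose proof (block_size_ge1 q). destruct (in_piece_self q Hq Hsp) as [Hu _].
  set (e := q - start q). set (l := block_lo q). set (h := block_hi q). set (d := step q).
  assert (Hslopes : sumR (fun j => if in_block l h j then 1 / block_size q else 0) n = 1).
  { rewrite (sumR_in_block l h n (fun _ => 1 / block_size q) Hb1 Hb2).
    rewrite sumR_const. assert (Hk: 1 <= INR (h - l + 1))
      by (pose proof (block_size_ge1 q) as K; unfold block_size in K; exact K).
    unfold block_size. fold l h. field. lra. }
  assert (Hsteps : sumR (fun j => if in_block l h j then clamp (e - INR (h - j) * d) d else 0) n =
              Rmin e (INR (h - l + 1) * d)).
  { rewrite (sumR_in_block l h n (fun m => clamp (e - INR m * d) d) Hb1 Hb2).
    apply sumR_clamp; unfold e, d; lra. }
  assert (Htail : sumR (fun j => if Nat.eqb j h then Rmax 0 (e - INR (h - l + 1) * d) else 0) n =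
              Rmax 0 (e - INR (h - l + 1) * d)) by (apply sumR_indicator; auto).
  rewrite (sumR_ext _ (fun j => (-e) * (if in_block l h j then 1 / block_size q else 0) +
     ((if in_block l h j then clamp (e - INR (h - j) * d) d else 0) +
      (if Nat.eqb j h then Rmax 0 (e - INR (h - l + 1) * d) else 0)))).
  - rewrite !sumR_plus, sumR_scal. rewrite Hslopes, Hsteps, Htail.
    assert (0 <= INR (h - l + 1) * d) by (apply Rmult_le_pos; [apply pos_INR|unfold d; lra]).
    unfold Rmin, Rmax. repeat destruct Rle_dec; unfold e in *; lra.
  - intros j Hj. unfold correction, staircase, slope, block_slope. fold e l h d. unfold block_size.
    fold l h.
    destruct (in_block l h j); ring.
Qed.

Lemma stair_ordered_regular q j : I q -> ~ special q -> (S j < n)%nat ->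
  stair q j <= stair q (S j).
Proof.
  intros Hq Hsp Hj. destruct (block_bounds q Hq Hsp) as [Hb1 Hb2].
  pose proof (step_pos q Hq Hsp) as Hd.
  rewrite (stair_in_piece q q j), (stair_in_piece q q (S j))
    by (try apply in_piece_self; auto; lia).
  pose proof (base_ordered q j Hq Hsp Hj) as Hbase.
  pose proof (staircase_nonneg (block_lo q) (block_hi q) (step q) (q - start q) (S j) ltac:(lra)).
  destruct (Nat.lt_ge_cases j (block_lo q)) as [Hlo|Hlo];
    [rewrite (staircase_out_of_block _ _ _ _ j) by (auto; lia); lra|].
  destruct (Nat.lt_ge_cases j (block_hi q)) as [Hhi|Hhi].
  - rewrite (base_block q j), (base_block q (S j)) by (auto; lia).
    pose proof (staircase_mono_in_block (block_lo q) (block_hi q) (step q) (q - start q) j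
      ltac:(lra) Hlo Hhi). lra.
  - rewrite (staircase_out_of_block _ _ _ _ (S j)) by (auto; lia).
    destruct (Nat.eq_dec j (block_hi q)) as [->|Hne];
      [|rewrite (staircase_out_of_block _ _ _ _ j) by (auto; lia); lra].
    assert (HR : ~ unbounded_right q)
      by (intros HR; apply (unbounded_block_hi_last q Hq Hsp HR); auto).
    pose proof (finish_ordered q (block_hi q) Hq Hsp HR Hj) as Htop.
    rewrite (slope_in q (block_hi q)), (slope_out q (S (block_hi q))) in Htop by lia.
    rewrite <- (step_finite q HR) in Htop. pose proof (block_size_ge1 q).
    replace (1 / block_size q * (block_size q * step q)) with (step q) in Htop by (field; lra).
    destruct (in_piece_self q Hq Hsp) as [_ [|Hfin]]; [tauto|].
    pose proof (step_finite q HR). unfold block_size in *.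
    pose proof (staircase_le_step (block_lo q) (block_hi q) (step q) (q - start q) (block_hi q)
      ltac:(lra) ltac:(lra)). lra.
Qed.

Lemma stair_cond1 : cond1 n I stair.
Proof.
  intros q Hq. destruct (classic (special q)) as [Hsp|Hsp].
  - destruct (Pt_cond1 q Hq) as [H1 [H2 H3]]. rewrite !stair_special by auto.
    split; auto. split.
    + intros j Hj. rewrite !stair_special by auto. auto.
    + rewrite (sumR_ext _ (Pt q)); auto. intros j _. apply stair_special; auto.
  - split; [|split; [intros j Hj; apply stair_ordered_regular; auto|]].
    + pose proof dimension_pos. pose proof (step_pos q Hq Hsp).
      rewrite (stair_in_piece q q 0) by (auto; apply in_piece_self; auto).
      pose proof (base_nonneg q Hq Hsp).
      pose proof (staircase_nonneg (block_lo q) (block_hi q) (step q) (q - start q) 0 ltac:(lra)).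
      lra.
    + rewrite (sumR_ext _ (fun j => Pt q j + correction q j))
        by (intros; apply stair_not_special; auto).
      rewrite sumR_plus, sumR_correction by auto. destruct (Pt_cond1 q Hq) as [_ [_ H3]]. lra.
Qed.

Theorem stair_n_system : n_system n I stair.
Proof.
  apply n_system_of_locally_unit_slope; [|apply stair_cond1].
  intros x Hx. destruct (classic (special x));
    [apply stair_locally_unit_slope_special | apply stair_locally_unit_slope_regular]; auto.
Qed.

Lemma stair_on_D t j : D t -> stair t j = Pt t j.
Proof. intros Ht. apply stair_special. split; auto. Qed.

End Construction.

Theorem mainTheorem5 :
  forall (n : nat) (I : R -> Prop) (Pt : R -> nat -> R) (D : R -> Prop),
    (2 <= n)%nat ->
    good_interval I ->
    gen_n_system n I Pt ->
    (forall t, D t -> I t) ->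
    discrete_in I D ->
    exists P : R -> nat -> R,
      n_system n I P /\
      forall t, D t -> forall j, (j < n)%nat -> P t j = Pt t j.
Proof.
  intros n I Pt D _ HI HG HDI HDd.
  exists (stair n I Pt D). split.
  - apply stair_n_system; auto.
  - intros t Ht j _. apply stair_on_D; auto.
Qed.
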